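(* Let $\gamma>0$ and $f_I=\chi_{[0,1/(1+\gamma)]}$ (value $1$ on $[0,\frac1{1+\gamma}]$, $0$ elsewhere), so that $u_I(\xi)=(\gamma\xi)^{1/\gamma}\chi_{[0,1/\gamma]}(\xi)$. Then the entropy solution $u$ of the split Cauchy problem with datum $u_I$ vanishes for $\xi<0$ and for $\xi>0$ is $$u(\xi,t)=\begin{cases}\left(\frac{\gamma\xi}{1-\gamma t}\right)^{1/\gamma}, & 0\le\xi\le\frac1\gamma-t,\ 0\le t<\frac1\gamma,\\[1mm] \left(\frac{1-\gamma\xi}{\gamma t}\right)^{1/\gamma}, & \max\{0,\frac1\gamma-t\}\le\xi\le\frac1\gamma,\\[1mm] 0&\text{otherwise.}\end{cases}$$ Consequently $\rho(x,t)=\xi'(x)u(\xi(x),t)$ is given, for $x>0$, by $$\rho(x,t)=\begin{cases}(1-\gamma t)^{-1/\gamma}, & 0< x\le \frac{(1-\gamma t)^{(1+\gamma)/\gamma}}{1+\gamma},\ 0\le t<\frac1\gamma,\\[1mm] \left[\frac{((1+\gamma)x)^{-\gamma/(1+\gamma)}-1}{\gamma t}\right]^{1/\gamma}, & \max\Bigl\{0,\frac{(1-\gamma t)_+^{(1+\gamma)/\gamma}}{1+\gamma}\Bigr\}\le x\le\frac1{1+\gamma},\\[1mm] 0&\text{otherwise,}\end{cases}$$ and $\rho(x,t)=0$ for $x<0$. In particular $\int_0^\infty\rho(x,t)\,dx=\frac1{1+\gamma}$ for $0\le t\le\frac1\gamma$, while $\int_0^\infty\rho(x,t)\,dx=\frac{1}{1+\gamma}(\gamma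 t)^{-1/\gamma}$ for $t\ge\frac1\gamma$.
   Context: Here $\xi(x)=\operatorname{sign}(x)\frac1\gamma((1+\gamma)|x|)^{\gamma/(1+\gamma)}$ and $u_I(\xi)=(\gamma|\xi|)^{1/\gamma}f_I\bigl(\operatorname{sign}(\xi)\frac{1}{1+\gamma}(\gamma|\xi|)^{(1+\gamma)/\gamma}\bigr)$. An entropy solution of the split Cauchy problem with datum $u_I$ means: $u\in L^\infty([0,\infty);L^1\cap BV(\mathbb{R}))$, $u|_{\xi>0}$ a weak solution of $u_t-(\frac{1}{1+\gamma}u^{1+\gamma})_\xi=0$ on $\xi>0$ with datum $u_I|_{\xi>0}$ (no boundary condition at $\xi=0$), $u|_{\xi<0}$ a weak solution of $u_t+(\frac{1}{1+\gamma}u^{1+\gamma})_\xi=0$ on $\xi<0$ with datum $u_I|_{\xi<0}$, and for every $t$: $u(\xi_0^-,t)\ge u(\xi_0^+,t)$ if $\xi_0<0$, $u(\xi_0^-,t)\le u(\xi_0^+,t)$ if $\xi_0>0$ (such a solution is unique). *)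

From Stdlib Require Import Reals Lra List Sorted.
Import ListNotations.
Open Scope R_scope.

(* x^y for x > 0; we set it to 0 when x <= 0 (so 0^y = 0 for the positive
   exponents used here).  Stdlib's Rpower 0 y would give exp 0 = 1. *)
Definition powp (x y : R) : R := if Rlt_dec 0 x then Rpower x y else 0.

Definition sgn (x : R) : R :=
  if Rlt_dec 0 x then 1 else if Rlt_dec x 0 then -1 else 0.

Definition xi (g x : R) : R :=
  sgn x * (/ g * powp ((1 + g) * Rabs x) (g / (1 + g))).

Definition dxi (g x : R) : R := powp ((1 + g) * Rabs x) (- / (1 + g)).

Definition u_I (g : R) (fI : R -> R) (z : R) : R :=
  powp (g * Rabs z) (/ g) *
  fI (sgn z * (/ (1 + g) * powp (g * Rabs z) ((1 + g) / g))).

Definition fI_ex (g x : R) : R :=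
  if Rle_dec 0 x then (if Rle_dec x (/ (1 + g)) then 1 else 0) else 0.

Definition flux (g v : R) : R := / (1 + g) * powp v (1 + g).

Definition is_RInt (f : R -> R) (a b v : R) : Prop :=
  exists pr : Riemann_integrable f a b, RiemannInt pr = v.

Definition cont2 (f : R -> R -> R) : Prop :=
  forall x t eps, 0 < eps -> exists delta, 0 < delta /\
    forall x' t', Rabs (x' - x) < delta -> Rabs (t' - t) < delta ->
      Rabs (f x' t' - f x t) < eps.

Definition C1_test (phi phix phit : R -> R -> R) : Prop :=
  (forall x t, derivable_pt_lim (fun y => phi y t) x (phix x t)) /\
  (forall x t, derivable_pt_lim (fun s => phi x s) t (phit x t)) /\
  cont2 phix /\ cont2 phit.

(* Weak solution of  u_t + (s * F(u))_xi = 0  on the open set D (a half line)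
   times [0,oo), with initial datum uI, for test functions whose support is a
   compact box [a,b] x [0,T] with [a,b] inside D (no condition at the
   boundary of D; t = 0 is allowed, giving the datum term):
     int_0^T int_a^b (u phi_t + s F(u) phi_xi) dxi dt
       + int_a^b uI(xi) phi(xi,0) dxi = 0. *)
Definition weak_sol (g : R) (D : R -> Prop) (s : R) (uI : R -> R)
    (u : R -> R -> R) : Prop :=
  forall (phi phix phit : R -> R -> R) (a b T : R),
    C1_test phi phix phit -> a < b -> 0 < T ->
    (forall x, a <= x <= b -> D x) ->
    (forall x t, (x < a \/ b < x \/ T < t) -> phi x t = 0) ->
    exists (G : R -> R) (I0 I1 : R),
      (forall t, 0 <= t <= T ->
         is_RInt (fun x => u x t * phit x t + s * flux g (u x t) * phix x t)
                 a b (G t)) /\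
      is_RInt G 0 T I0 /\
      is_RInt (fun x => uI x * phi x 0) a b I1 /\
      I0 + I1 = 0.

Fixpoint var_list (f : R -> R) (l : list R) : R :=
  match l with
  | x :: ((y :: _) as l') => Rabs (f y - f x) + var_list f l'
  | _ => 0
  end.

Definition L1BV_bound (f : R -> R) (M : R) : Prop :=
  (forall a b, a < b -> exists I, is_RInt (fun z => Rabs (f z)) a b I /\ I <= M) /\
  (forall l : list R, Sorted Rlt l -> var_list f l <= M).

Definition left_lim (f : R -> R) (x0 l : R) : Prop :=
  forall eps, 0 < eps -> exists delta, 0 < delta /\
    forall x, x0 - delta < x < x0 -> Rabs (f x - l) < eps.

Definition right_lim (f : R -> R) (x0 r : R) : Prop :=
  forall eps, 0 < eps -> exists delta, 0 < delta /\
    forall x, x0 < x < x0 + delta -> Rabs (f x - r) < eps.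

Definition entropy_solution (g : R) (uI : R -> R) (u : R -> R -> R) : Prop :=
  (exists M, forall t, 0 <= t -> L1BV_bound (fun z => u z t) M) /\
  weak_sol g (fun x => 0 < x) (-1) uI u /\
  weak_sol g (fun x => x < 0) 1 uI u /\
  (forall t, 0 < t -> forall x0 l r,
     left_lim (fun z => u z t) x0 l -> right_lim (fun z => u z t) x0 r ->
     (x0 < 0 -> r <= l) /\ (0 < x0 -> l <= r)).

Definition u_case2 (g z t : R) : R :=
  if Rle_dec (Rmax 0 (/ g - t)) z then
    (if Rle_dec z (/ g) then powp ((1 - g * z) / (g * t)) (/ g) else 0)
  else 0.

(* first branch (taking priority on the overlap, where both agree):
   0 <= z <= 1/g - t, 0 <= t < 1/g  ->  (g z/(1 - g t))^{1/g};
   zero for z < 0 and otherwise. *)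
Definition u_ex (g z t : R) : R :=
  if Rlt_dec z 0 then 0 else
  if Rle_dec z (/ g - t) then
    (if Rle_dec 0 t then
       (if Rlt_dec t (/ g) then powp (g * z / (1 - g * t)) (/ g)
        else u_case2 g z t)
     else u_case2 g z t)
  else u_case2 g z t.

Definition rho (g x t : R) : R := dxi g x * u_ex g (xi g x) t.

Definition rho_case2 (g x t : R) : R :=
  if Rle_dec (Rmax 0 (powp (Rmax 0 (1 - g * t)) ((1 + g) / g) / (1 + g))) x then
    (if Rle_dec x (/ (1 + g)) then
       powp ((powp ((1 + g) * x) (- g / (1 + g)) - 1) / (g * t)) (/ g)
     else 0)
  else 0.

(* first branch: 0 < x <= (1-g t)^{(1+g)/g}/(1+g), 0 <= t < 1/g
     -> (1 - g t)^{-1/g};  zero for x <= 0 (only x <> 0 is used). *)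
Definition rho_ex (g x t : R) : R :=
  if Rle_dec x 0 then 0 else
  if Rle_dec x (powp (1 - g * t) ((1 + g) / g) / (1 + g)) then
    (if Rle_dec 0 t then
       (if Rlt_dec t (/ g) then powp (1 - g * t) (- / g)
        else rho_case2 g x t)
     else rho_case2 g x t)
  else rho_case2 g x t.

Definition improper_int0 (f : R -> R) (L : R) : Prop :=
  forall eps, 0 < eps -> exists delta, 0 < delta /\
    forall a b, 0 < a < delta -> / delta < b ->
      exists I, is_RInt f a b I /\ Rabs (I - L) < eps.

(** For [xi > 0] the
  equation [u_t - (u^(1+g)/(1+g))_xi = 0] transports [u] leftwards with
  speed [u^g].  Left of the separating characteristic [xi = 1/g - t] the
  solution is carried by the straight characteristics [xi = s (1/g - t)]
  issued from the datum; right of it there is a rarefaction fan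
  [xi = 1/g - s t] centred at [xi = 1/g].  In both parametrisations
  [u = s^(1/g)], [s] in [[0, 1]], which is what makes every computation
  explicit.  Characteristics leave through [xi = 0] (no boundary condition
  is imposed there), so the mass starts to decrease at [t = 1/g].

  On
    [xi < 0] everything vanishes.
  - Entropy conditions: [u(.,t)] takes values in [[0,1]] and is unimodal
    (total variation at most 2), and is continuous at every [xi <> 0] for
    [t > 0], so the one-sided limit condition holds trivially.
  - Back to [x]: [xi] is a C^1 change of variables on [x > 0]; [rho] is
    computed branch by branch, and [int rho dx = int u dxi] is evaluated with
    an explicit antiderivative of [u(., t)], whose limit as [x -> 0+] gives
    the mass [1/(1+g)] for [t <= 1/g] and [(g t)^(-1/g)/(1+g)] afterwards.
*)

From Pilot Require Import Defs.
From Stdlib Require Import Reals Lra Sorted.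
From Coquelicot Require Import Coquelicot.
Open Scope R_scope.

Lemma ball_bounds (x d y : R) : ball x d y -> x - d < y < x + d.
Proof. intros H; change (Rabs (y - x) < d) in H; apply Rabs_def2 in H; lra. Qed.

Lemma Rabs_ball (x d y : R) : Rabs (y - x) < d -> ball x d y.
Proof. exact (fun H => H). Qed.

(** ** Real powers with the convention [powp x r = 0] for [x <= 0] *)

Lemma powp_of_pos x r : 0 < x -> powp x r = Rpower x r.
Proof. intros H; unfold powp; destruct (Rlt_dec 0 x); [reflexivity | lra]. Qed.

Lemma powp_of_nonpos x r : x <= 0 -> powp x r = 0.
Proof. intros H; unfold powp; destruct (Rlt_dec 0 x); [lra | reflexivity]. Qed.

Lemma powp_nonneg x r : 0 <= powp x r.
Proof. unfold powp; destruct (Rlt_dec 0 x); [left; apply exp_pos | lra]. Qed.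

Lemma powp_pos x r : 0 < x -> 0 < powp x r.
Proof. intros H; rewrite powp_of_pos by exact H; apply exp_pos. Qed.

Lemma powp_one_base r : powp 1 r = 1.
Proof. rewrite powp_of_pos by lra; unfold Rpower; rewrite ln_1, Rmult_0_r; apply exp_0. Qed.

Lemma powp_one_exp x : 0 <= x -> powp x 1 = x.
Proof.
  intros H; destruct (Rle_lt_or_eq_dec 0 x H) as [Hx | <-].
  - rewrite powp_of_pos by exact Hx; apply Rpower_1, Hx.
  - apply powp_of_nonpos; lra.
Qed.

Lemma powp_mul_base x y r : 0 <= x -> 0 <= y -> powp (x * y) r = powp x r * powp y r.
Proof.
  intros Hx Hy.
  destruct (Rle_lt_or_eq_dec 0 x Hx) as [hx | <-];
    [| rewrite Rmult_0_l, !(powp_of_nonpos 0) by lra; ring].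
  destruct (Rle_lt_or_eq_dec 0 y Hy) as [hy | <-];
    [| rewrite Rmult_0_r, !(powp_of_nonpos 0) by lra; ring].
  rewrite !powp_of_pos by nra; symmetry; apply Rpower_mult_distr; assumption.
Qed.

Lemma powp_powp x a b : powp (powp x a) b = powp x (a * b).
Proof.
  destruct (Rlt_dec 0 x) as [Hx | Hx].
  - rewrite !(powp_of_pos x) by exact Hx.
    rewrite powp_of_pos by apply exp_pos; apply Rpower_mult.
  - rewrite !(powp_of_nonpos x) by lra; apply powp_of_nonpos; lra.
Qed.

Lemma powp_add_exp x a b : powp x (a + b) = powp x a * powp x b.
Proof.
  destruct (Rlt_dec 0 x).
  - rewrite !powp_of_pos by assumption; apply Rpower_plus.
  - rewrite !powp_of_nonpos by lra; ring.
Qed.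

Lemma powp_opp_exp x a : 0 < x -> powp x (- a) = / powp x a.
Proof. intros; rewrite !powp_of_pos by assumption; apply Rpower_Ropp. Qed.

Lemma powp_inv_base x a : 0 < x -> powp (/ x) a = / powp x a.
Proof.
  intros H; rewrite !powp_of_pos by (try apply Rinv_0_lt_compat; assumption).
  unfold Rpower; rewrite ln_Rinv, <- exp_Ropp by exact H; f_equal; ring.
Qed.

Lemma powp_div_base x y r : 0 <= x -> 0 < y -> powp (x / y) r = powp x r / powp y r.
Proof.
  intros Hx Hy; unfold Rdiv.
  rewrite powp_mul_base, powp_inv_base; try reflexivity; try assumption.
  left; apply Rinv_0_lt_compat, Hy.
Qed.

Lemma powp_le_base x y r : 0 <= r -> x <= y -> powp x r <= powp y r.
Proof.
  intros Hr Hxy; destruct (Rle_dec x 0) as [Hx | Hx].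
  - rewrite powp_of_nonpos by exact Hx; apply powp_nonneg.
  - rewrite !powp_of_pos by lra; apply Rle_Rpower_l; lra.
Qed.

Lemma powp_lt_base x y r : 0 < r -> 0 <= x < y -> powp x r < powp y r.
Proof.
  intros Hr [H1 H2]; destruct (Rle_lt_or_eq_dec 0 x H1) as [Hx | <-].
  - rewrite !powp_of_pos by lra; apply Rlt_Rpower_l; lra.
  - rewrite (powp_of_nonpos 0) by lra; apply powp_pos; lra.
Qed.

Lemma powp_le_one x r : 0 <= r -> x <= 1 -> powp x r <= 1.
Proof. intros; rewrite <- (powp_one_base r); apply powp_le_base; assumption. Qed.

(** [powp . r] is continuous everywhere for [r > 0]; at [0] this uses the
    convention [0^r = 0]. *)
Lemma powp_continuous r z : 0 < r -> continuity_pt (fun x => powp x r) z.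
Proof.
  intros Hr; destruct (Rtotal_order z 0) as [Hz | [-> | Hz]].
  - apply continuity_pt_ext_loc with (f := fun _ => 0).
    + exists (mkposreal (- z) ltac:(lra)); intros y Hy%ball_bounds; simpl in Hy; rewrite powp_of_nonpos; lra.
    + apply continuity_pt_const; intros a b; reflexivity.
  - apply continuity_pt_locally; intros eps.
    exists (mkposreal (Rpower eps (/ r)) (exp_pos _)); intros y Hy%ball_bounds; simpl in Hy.
    rewrite (powp_of_nonpos 0), Rminus_0_r, Rabs_pos_eq
      by (try apply powp_nonneg; lra).
    destruct (Rle_dec y 0); [rewrite powp_of_nonpos by assumption; apply cond_pos |].
    rewrite powp_of_pos by lra.
    replace (pos eps) with (Rpower (Rpower eps (/ r)) r).
    + apply Rlt_Rpower_l; lra.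
    + rewrite Rpower_mult, Rinv_l by lra; apply Rpower_1, cond_pos.
  - apply continuity_pt_ext_loc with (f := fun x => Rpower x r).
    + exists (mkposreal z Hz); intros y Hy%ball_bounds; simpl in Hy; rewrite powp_of_pos; lra.
    + apply derivable_continuous_pt; exists (r * Rpower z (r - 1)).
      apply derivable_pt_lim_power, Hz.
Qed.

Lemma powp_derivative_pos r z : 0 < z ->
  derivable_pt_lim (fun x => powp x r) z (r * powp z (r - 1)).
Proof.
  intros Hz; rewrite powp_of_pos by exact Hz; apply is_derive_Reals.
  apply is_derive_ext_loc with (f := fun x => Rpower x r).
  - exists (mkposreal z Hz); intros y Hy%ball_bounds; simpl in Hy; rewrite powp_of_pos; lra.
  - apply is_derive_Reals, derivable_pt_lim_power, Hz.
Qed.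

Lemma powp_derivative r z : 1 < r ->
  derivable_pt_lim (fun x => powp x r) z (r * powp z (r - 1)).
Proof.
  intros Hr; destruct (Rtotal_order z 0) as [Hz | [-> | Hz]];
    [| | apply powp_derivative_pos, Hz];
    rewrite (powp_of_nonpos _ (r - 1)), Rmult_0_r by lra.
  - apply is_derive_Reals, is_derive_ext_loc with (f := fun _ => 0).
    + exists (mkposreal (- z) ltac:(lra)); intros y Hy%ball_bounds; simpl in Hy; rewrite powp_of_nonpos; lra.
    + apply is_derive_Reals, derivable_pt_lim_const.
  - intros eps Heps.
    destruct (proj1 (continuity_pt_locally _ _) (powp_continuous (r - 1) 0 ltac:(lra))
                (mkposreal eps Heps)) as [d Hd].
    exists d; intros h hn hh; rewrite Rplus_0_l, (powp_of_nonpos 0) by lra.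
    specialize (Hd h (Rabs_ball _ _ _ ltac:(rewrite Rminus_0_r; exact hh))).
    simpl in Hd; rewrite (powp_of_nonpos 0), !Rminus_0_r in Hd by lra.
    destruct (Rle_dec h 0).
    + rewrite powp_of_nonpos by assumption.
      unfold Rminus; rewrite Rplus_opp_r, Rdiv_0_l, Ropp_0, Rplus_0_r, Rabs_R0; exact Heps.
    + replace (r - 1) with (r + - (1)) in Hd by ring.
      rewrite powp_add_exp, powp_opp_exp, powp_one_exp in Hd by lra.
      unfold Rdiv; rewrite !Rminus_0_r; exact Hd.
Qed.

Lemma mvt_between f f' : (forall y, derivable_pt_lim f y (f' y)) ->
  forall x u, exists z, Rabs (z - x) <= Rabs (u - x) /\ f u - f x = f' z * (u - x).
Proof.
  intros Hd x u; destruct (Rtotal_order x u) as [H | [<- | H]].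
  - destruct (MVT_cor2 f f' x u H (fun c _ => Hd c)) as [z [E Hz]].
    exists z; rewrite !Rabs_pos_eq by lra; split; lra.
  - exists x; split; [lra | ring].
  - destruct (MVT_cor2 f f' u x H (fun c _ => Hd c)) as [z [E Hz]].
    exists z; rewrite !Rabs_left1 by lra; split; lra.
Qed.

(** [ring] on a real equation stated at a Coquelicot structure over [R]. *)
Ltac ring_R := match goal with |- ?a = ?b => change (@eq R a b) end; ring.

Definition cont_R (f : R -> R) : Prop := forall s, continuity_pt f s.

Lemma cont_R_ex_RInt f a b : cont_R f -> ex_RInt f a b.
Proof.
  intros H; apply (ex_RInt_continuous (V := R_CompleteNormedModule)).
  intros z _; apply continuity_pt_filterlim, H.
Qed.

Lemma cont_R_plus f h : cont_R f -> cont_R h -> cont_R (fun s => f s + h s).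
Proof. intros A B s; apply continuity_pt_plus; auto. Qed.

Lemma cont_R_mult f h : cont_R f -> cont_R h -> cont_R (fun s => f s * h s).
Proof. intros A B s; apply continuity_pt_mult; auto. Qed.

Lemma cont_R_const c : cont_R (fun _ => c).
Proof. intros s; apply continuity_pt_const; intros a b; reflexivity. Qed.

Lemma cont_R_id : cont_R (fun s => s).
Proof. intros s; apply continuity_pt_id. Qed.

Lemma cont_R_comp f h : cont_R f -> cont_R h -> cont_R (fun s => h (f s)).
Proof. intros A B s; apply (continuity_pt_comp f h s); auto. Qed.

Lemma cont_R_powp r : 0 < r -> cont_R (fun s => powp s r).
Proof. intros H s; apply powp_continuous, H. Qed.

Lemma cont_R_affine k a : cont_R (fun s => k + s * a).
Proof. apply cont_R_plus, cont_R_mult; auto using cont_R_const, cont_R_id. Qed.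

Lemma cont_R_powp_affine c1 c2 r : 0 < r -> cont_R (fun s => powp (c1 + c2 * s) r).
Proof.
  intros Hr; apply (cont_R_comp (fun s => c1 + c2 * s) (fun y => powp y r)).
  - intros s; apply continuity_pt_ext with (f := fun s => c1 + s * c2);
      [intros; ring | apply cont_R_affine].
  - apply cont_R_powp, Hr.
Qed.

Lemma affine_derivative k a s : derivable_pt_lim (fun s => k + s * a) s a.
Proof.
  assert (H := derivable_pt_lim_plus (fun _ => k) (fun s => s * a) s _ _
                 (derivable_pt_lim_const k s)
                 (derivable_pt_lim_mult (fun s => s) (fun _ => a) s _ _
                    (derivable_pt_lim_id s) (derivable_pt_lim_const a s))).
  unfold plus_fct in H; cbv beta in H.
  replace (0 + (1 * a + s * 0)) with a in H by ring; exact H.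
Qed.

Lemma powp_affine_derivative k m r x : 1 < r ->
  derivable_pt_lim (fun y => powp (k + m * y) r) x (r * powp (k + m * x) (r - 1) * m).
Proof.
  intros hr.
  assert (D := derivable_pt_lim_comp (fun y => k + y * m) (fun s => powp s r) x m _
                 (affine_derivative k m x) (powp_derivative r (k + x * m) hr)).
  apply (derivable_pt_lim_ext _ _ _ _ (fun y => f_equal (fun z => powp z r)
           (Rplus_eq_compat_l k _ _ (Rmult_comm y m)))) in D.
  unfold comp in D; rewrite (Rmult_comm x m) in D; exact D.
Qed.

Lemma RInt_lin2 f1 f2 c1 c2 a b : cont_R f1 -> cont_R f2 ->
  RInt (fun s => c1 * f1 s + c2 * f2 s) a b = c1 * RInt f1 a b + c2 * RInt f2 a b.
Proof.
  intros A B.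
  rewrite (RInt_plus (V := R_CompleteNormedModule) (fun s => c1 * f1 s) (fun s => c2 * f2 s))
    by (apply cont_R_ex_RInt, cont_R_mult; auto using cont_R_const).
  rewrite (RInt_scal (V := R_CompleteNormedModule) f1), (RInt_scal (V := R_CompleteNormedModule) f2)
    by (apply cont_R_ex_RInt; assumption).
  reflexivity.
Qed.

Lemma cont2_first F t x : cont2 F -> continuity_pt (fun y => F y t) x.
Proof.
  intros H; apply continuity_pt_locally; intros eps.
  destruct (H x t eps (cond_pos eps)) as [d [hd Hd]]; exists (mkposreal d hd).
  intros y Hy; apply Hd; [exact Hy | rewrite Rminus_eq_0, Rabs_R0; exact hd].
Qed.

(** A C^1 test function is (Fréchet) differentiable: combine the mean value
    theorem in each variable with the continuity of the partial derivatives. *)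
Lemma C1_test_differentiable phi phix phit x t : C1_test phi phix phit ->
  differentiable_pt_lim phi x t (phix x t) (phit x t).
Proof.
  intros [Dx [Dt [Cx Ct]]] [eps heps]; simpl.
  destruct (Cx x t (eps / 2) ltac:(lra)) as [d1 [hd1 Hd1]].
  destruct (Ct x t (eps / 2) ltac:(lra)) as [d2 [hd2 Hd2]].
  exists (mkposreal (Rmin d1 d2) (Rmin_pos _ _ hd1 hd2)); intros u v Hu Hv; simpl in Hu, Hv.
  assert (Hm1 := Rmin_l d1 d2); assert (Hm2 := Rmin_r d1 d2).
  destruct (mvt_between (fun y => phi y v) (fun y => phix y v) (fun y => Dx y v) x u)
    as [z [Hz Ez]].
  destruct (mvt_between (fun s => phi x s) (fun s => phit x s) (fun s => Dt x s) t v)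
    as [w [Hw Ew]].
  replace (phi u v - phi x t - (phix x t * (u - x) + phit x t * (v - t))) with
    ((phix z v - phix x t) * (u - x) + (phit x w - phit x t) * (v - t)) by lra.
  assert (A1 : Rabs (phix z v - phix x t) < eps / 2) by (apply Hd1; lra).
  assert (A2 : Rabs (phit x w - phit x t) < eps / 2)
    by (apply Hd2; [rewrite Rminus_eq_0, Rabs_R0 |]; lra).
  eapply Rle_trans; [apply Rabs_triang | rewrite !Rabs_mult].
  assert (M1 := Rmax_l (Rabs (u - x)) (Rabs (v - t))).
  assert (M2 := Rmax_r (Rabs (u - x)) (Rabs (v - t))).
  assert (0 <= Rabs (u - x)) by apply Rabs_pos; assert (0 <= Rabs (v - t)) by apply Rabs_pos.
  assert (0 <= Rabs (phix z v - phix x t)) by apply Rabs_pos.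
  assert (0 <= Rabs (phit x w - phit x t)) by apply Rabs_pos.
  nra.
Qed.

Lemma C1_derivative_along_line phi phix phit k m s t : C1_test phi phix phit ->
  derivable_pt_lim (fun u => phi (k + s * (m - u)) u) t
    (phix (k + s * (m - t)) t * (- s) + phit (k + s * (m - t)) t).
Proof.
  intros H; rewrite <- (Rmult_1_r (phit _ t)).
  apply (derivable_pt_lim_comp_2d phi (fun u => k + s * (m - u)) (fun u => u)).
  - apply C1_test_differentiable, H.
  - replace (- s) with (0 + s * (0 - 1)) by ring.
    apply derivable_pt_lim_plus; [apply derivable_pt_lim_const |].
    apply derivable_pt_lim_scal, derivable_pt_lim_minus;
      [apply derivable_pt_lim_const | apply derivable_pt_lim_id].
  - apply derivable_pt_lim_id.
Qed.

Lemma cont2_along_line F k m t s : cont2 F ->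
  continuity_2d_pt (fun u v => F (k + v * (m - u)) u) t s.
Proof.
  intros H eps.
  destruct (H (k + s * (m - t)) t eps (cond_pos eps)) as [d [hd Hd]].
  set (B := Rabs (m - t) + Rabs s + 2).
  assert (0 <= Rabs (m - t)) by apply Rabs_pos; assert (0 <= Rabs s) by apply Rabs_pos.
  assert (hd' : 0 < Rmin 1 (d / (2 * B))) by (apply Rmin_pos; [| apply Rdiv_lt_0_compat]; unfold B; lra).
  exists (mkposreal _ hd'); intros u v Hu Hv; simpl in Hu, Hv.
  set (r := Rmin 1 (d / (2 * B))) in *.
  assert (Hr1 : r <= 1) by apply Rmin_l.
  assert (Hr2 : r * B <= d / 2) by
    (apply Rle_trans with (d / (2 * B) * B);
       [apply Rmult_le_compat_r; [unfold B; lra | apply Rmin_r] | right; field; unfold B; lra]).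
  apply Hd.
  - replace (k + v * (m - u) - (k + s * (m - t))) with ((v - s) * (m - t) + v * (t - u)) by ring.
    eapply Rle_lt_trans; [apply Rabs_triang | rewrite !Rabs_mult].
    assert (Rabs v <= Rabs s + 1).
    { replace v with (s + (v - s)) by ring; eapply Rle_trans; [apply Rabs_triang | lra]. }
    rewrite (Rabs_minus_sym t u).
    assert (0 <= Rabs (v - s)) by apply Rabs_pos; assert (0 <= Rabs (u - t)) by apply Rabs_pos.
    assert (Rabs (v - s) * Rabs (m - t) <= r * Rabs (m - t)) by (apply Rmult_le_compat_r; lra).
    assert (Rabs v * Rabs (u - t) <= (Rabs s + 1) * r)
      by (apply Rmult_le_compat; [apply Rabs_pos | | |]; lra).
    unfold B in Hr2; nra.
  - assert (r <= d) by (unfold B in Hr2; nra); lra.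
Qed.

Lemma cont_2d_of_second h x y : continuity_pt h y -> continuity_2d_pt (fun u v => h v) x y.
Proof.
  intros H eps; destruct (proj1 (continuity_pt_locally _ _) H eps) as [d Hd].
  exists d; intros u v _ Hv; apply Hd, Hv.
Qed.

Lemma cont_2d_swap f x y : continuity_2d_pt f x y -> continuity_2d_pt (fun u v => f v u) y x.
Proof. intros H eps; destruct (H eps) as [d Hd]; exists d; intros u v Hu Hv; apply Hd; assumption. Qed.

(** A parametric integral over a compact interval is continuous in the
    parameter (uniform continuity on [[a, b] x {t}]). *)
Lemma RInt_param_continuous f a b t : a <= b ->
  (forall s, a <= s <= b -> continuity_2d_pt f s t) ->
  (forall t', ex_RInt (fun s => f s t') a b) ->
  continuity_pt (fun t' => RInt (fun s => f s t') a b) t.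
Proof.
  intros Hab Hc Hi; apply continuity_pt_locally; intros [ep hep].
  set (e := ep / (b - a + 1)).
  assert (he : 0 < e) by (apply Rdiv_lt_0_compat; lra).
  destruct (uniform_continuity_2d_1d f a b t Hc (mkposreal e he)) as [d Hd].
  exists d; intros t' Ht'%ball_bounds; simpl.
  rewrite <- (RInt_minus (V := R_CompleteNormedModule)) by apply Hi.
  eapply Rle_lt_trans.
  - apply abs_RInt_le_const with (M := e); [exact Hab | |].
    + apply (ex_RInt_minus (V := R_NormedModule)); apply Hi.
    + assert (hd := cond_pos d).
      intros s Hs; left; apply (Hd s t s t'); [lra | lra | lra | lra |].
      rewrite Rminus_eq_0, Rabs_R0; exact hd.
  - unfold e; apply Rlt_le_trans with ((b - a + 1) * (ep / (b - a + 1)));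
      [apply Rmult_lt_compat_r; [apply Rdiv_lt_0_compat |]; lra | right; field; lra].
Qed.

Lemma is_RInt_Riemann (f : R -> R) (a b v : R) : is_RInt f a b v -> Defs.is_RInt f a b v.
Proof.
  intros H; assert (E : ex_RInt f a b) by (exists v; exact H).
  exists (ex_RInt_Reals_0 f a b E); rewrite <- RInt_Reals.
  apply (is_RInt_unique (V := R_CompleteNormedModule)), H.
Qed.

Lemma is_RInt_vanishing (X : R -> R) (l r : R) :
  (forall x, Rmin l r < x < Rmax l r -> X x = 0) -> is_RInt X l r 0.
Proof.
  intros H; apply (is_RInt_ext (V := R_NormedModule) (fun _ => 0)).
  - intros x Hx; symmetry; auto.
  - assert (Hc := is_RInt_const (V := R_NormedModule) l r 0).
    unfold scal in Hc; simpl in Hc; unfold mult in Hc; simpl in Hc.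
    rewrite Rmult_0_r in Hc; exact Hc.
Qed.

Lemma is_RInt_support (X : R -> R) (a b lo hi V : R) :
  (forall x, x < a -> X x = 0) -> (forall x, b < x -> X x = 0) ->
  (forall x, x < lo -> X x = 0) -> (forall x, hi < x -> X x = 0) ->
  lo <= hi -> a < b -> is_RInt X lo hi V -> is_RInt X a b V.
Proof.
  intros Za Zb Zl Zh Hlh Hab HV.
  set (M0 := Rmin a lo); set (M1 := Rmax b hi).
  assert (h0a : M0 <= a) by apply Rmin_l; assert (h0l : M0 <= lo) by apply Rmin_r.
  assert (h1b : b <= M1) by apply Rmax_l; assert (h1h : hi <= M1) by apply Rmax_r.
  assert (Zero : forall l r (Z : forall x, l < x < r -> X x = 0), l <= r -> is_RInt X l r 0).
  { intros l r Z hlr; apply is_RInt_vanishing; intros x Hx.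
    rewrite Rmin_left, Rmax_right in Hx by exact hlr; apply Z, Hx. }
  assert (A := is_RInt_Chasles _ _ _ _ _ _
                 (is_RInt_Chasles _ _ _ _ _ _ (Zero M0 lo ltac:(intros; apply Zl; lra) h0l) HV)
                 (Zero hi M1 ltac:(intros; apply Zh; lra) h1h)).
  assert (Ex3 : ex_RInt X a b).
  { apply (ex_RInt_Chasles_2 X M0 a b); [lra |].
    apply (ex_RInt_Chasles_1 X M0 b M1); [lra | eexists; exact A]. }
  assert (B := is_RInt_Chasles _ _ _ _ _ _
                 (is_RInt_Chasles _ _ _ _ _ _ (Zero M0 a ltac:(intros; apply Za; lra) h0a)
                    (RInt_correct _ _ _ Ex3))
                 (Zero b M1 ltac:(intros; apply Zb; lra) h1b)).
  apply (is_RInt_unique (V := R_CompleteNormedModule)) in A.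
  apply (is_RInt_unique (V := R_CompleteNormedModule)) in B.
  unfold plus in A, B; simpl in A, B.
  replace V with (RInt X a b) by lra; apply (RInt_correct (V := R_CompleteNormedModule)), Ex3.
Qed.

Lemma RInt_nonneg_subinterval f L R a b : L <= a -> a <= b -> b <= R ->
  (forall x, 0 <= f x) -> ex_RInt f L R -> RInt f a b <= RInt f L R.
Proof.
  intros hLa hab hbR Hf E.
  assert (ELb : ex_RInt f L b) by (apply (ex_RInt_Chasles_1 f L b R); [lra | exact E]).
  assert (EbR : ex_RInt f b R) by (apply (ex_RInt_Chasles_2 f L b R); [lra | exact E]).
  assert (ELa : ex_RInt f L a) by (apply (ex_RInt_Chasles_1 f L a b); [lra | exact ELb]).
  assert (Eab : ex_RInt f a b) by (apply (ex_RInt_Chasles_2 f L a b); [lra | exact ELb]).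
  assert (C1 := RInt_Chasles (V := R_CompleteNormedModule) f L a b ELa Eab).
  assert (C2 := RInt_Chasles (V := R_CompleteNormedModule) f L b R ELb EbR).
  unfold plus in C1, C2; simpl in C1, C2.
  assert (0 <= RInt f L a) by (apply RInt_ge_0; auto).
  assert (0 <= RInt f b R) by (apply RInt_ge_0; auto).
  lra.
Qed.

Lemma is_RInt_affine_subst (Y : R -> R) (k d L : R) :
  (d <> 0 -> is_RInt (fun s => Y (k + s * d)) 0 1 L) -> is_RInt Y k (k + d) (d * L).
Proof.
  intros H; destruct (Req_dec d 0) as [-> | hd].
  - rewrite Rplus_0_r, Rmult_0_l; apply (is_RInt_point (V := R_NormedModule)).
  - specialize (H hd).
    assert (H1 : is_RInt (fun s => Y (k + s * d)) (/ d * k + (- k / d)) (/ d * (k + d) + (- k / d)) L).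
    { replace (/ d * k + (- k / d)) with 0 by (field; exact hd).
      replace (/ d * (k + d) + (- k / d)) with 1 by (field; exact hd); exact H. }
    apply (is_RInt_comp_lin (V := R_NormedModule)) in H1.
    apply (is_RInt_scal (V := R_NormedModule) _ _ _ d) in H1.
    eapply (is_RInt_ext (V := R_NormedModule)); [| exact H1].
    intros x _; unfold scal; simpl; unfold mult; simpl.
    replace (k + (/ d * x + - k / d) * d) with x by (field; exact hd); field; exact hd.
Qed.

Lemma is_RInt_antiderivative (F f : R -> R) (a b : R) : a <= b ->
  (forall x, is_derive F x (f x)) -> cont_R f -> is_RInt f a b (F b - F a).
Proof.
  intros hab D C; apply (is_RInt_derive (V := R_CompleteNormedModule)); intros x _;
    [apply D | apply continuity_pt_filterlim, C].
Qed.

Lemma ex_RInt_ae (f f1 : R -> R) (a b : R) : a <= b ->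
  (forall x, a < x < b -> f x = f1 x) -> cont_R f1 -> ex_RInt f a b.
Proof.
  intros hab E C; apply (ex_RInt_ext (V := R_CompleteNormedModule) f1).
  - intros x Hx; rewrite Rmin_left, Rmax_right in Hx by exact hab; symmetry; auto.
  - apply cont_R_ex_RInt, C.
Qed.

Lemma is_RInt_ae_antiderivative (f F f1 : R -> R) (a b : R) : a <= b ->
  (forall x, is_derive F x (f1 x)) -> cont_R f1 ->
  (forall x, a < x < b -> f x = f1 x) -> is_RInt f a b (F b - F a).
Proof.
  intros hab D C E; apply (is_RInt_ext (V := R_NormedModule) f1).
  - intros x Hx; rewrite Rmin_left, Rmax_right in Hx by exact hab; symmetry; auto.
  - apply is_RInt_antiderivative; assumption.
Qed.

Lemma is_RInt_two_pieces (f F1 F2 f1 f2 : R -> R) (c a b : R) : a <= b ->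
  (forall x, is_derive F1 x (f1 x)) -> (forall x, is_derive F2 x (f2 x)) ->
  cont_R f1 -> cont_R f2 ->
  (forall x, a < x < b -> x < c -> f x = f1 x) -> (forall x, a < x < b -> c < x -> f x = f2 x) ->
  (a <= c -> F1 c = F2 c) ->
  is_RInt f a b ((if Rle_dec b c then F1 b else F2 b) - (if Rle_dec a c then F1 a else F2 a)).
Proof.
  intros hab D1 D2 C1 C2 E1 E2 Eq.
  destruct (Rle_dec a c) as [ac | ca]; destruct (Rle_dec b c) as [bc | cb]; try lra.
  - apply is_RInt_ae_antiderivative with f1; auto.
    intros x Hx; apply E1; lra.
  - assert (A1 : is_RInt f a c (F1 c - F1 a))
      by (apply is_RInt_ae_antiderivative with f1; auto; intros x Hx; apply E1; lra).
    assert (A2 : is_RInt f c b (F2 b - F2 c))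
      by (apply is_RInt_ae_antiderivative with f2; auto; lra || (intros x Hx; apply E2; lra)).
    assert (A3 := is_RInt_Chasles _ _ _ _ _ _ A1 A2); unfold plus in A3; simpl in A3.
    replace (F2 b - F1 a) with (F1 c - F1 a + (F2 b - F2 c)) by (rewrite Eq by exact ac; ring).
    exact A3.
  - apply is_RInt_ae_antiderivative with f2; auto.
    intros x Hx; apply E2; lra.
Qed.

Lemma continuity_pt_glue f f1 f2 c :
  (forall x, x <= c -> f x = f1 x) -> (forall x, c <= x -> f x = f2 x) ->
  continuity_pt f1 c -> continuity_pt f2 c -> continuity_pt f c.
Proof.
  intros E1 E2 C1 C2; rewrite continuity_pt_locally in *; intros eps.
  destruct (C1 eps) as [d1 H1]; destruct (C2 eps) as [d2 H2].
  exists (mkposreal _ (Rmin_pos _ _ (cond_pos d1) (cond_pos d2))); intros y Hy.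
  assert (Hy1 : ball c d1 y) by (eapply Rlt_le_trans; [exact Hy | apply Rmin_l]).
  assert (Hy2 : ball c d2 y) by (eapply Rlt_le_trans; [exact Hy | apply Rmin_r]).
  assert (e12 : f1 c = f2 c) by (rewrite <- (E1 c), <- (E2 c) by lra; reflexivity).
  rewrite (E1 c) by lra; destruct (Rle_dec y c).
  - rewrite E1 by assumption; apply H1, Hy1.
  - rewrite E2, e12 by lra; apply H2, Hy2.
Qed.

Lemma continuity_pt_local f f1 c d : 0 < d ->
  (forall x, c - d < x < c + d -> f x = f1 x) -> continuity_pt f1 c -> continuity_pt f c.
Proof.
  intros hd E C; apply continuity_pt_ext_loc with f1; [| exact C].
  exists (mkposreal d hd); intros y Hy%ball_bounds; symmetry; apply E, Hy.
Qed.

Lemma continuity_pt_right_limit (h : R -> R) x0 : continuity_pt h x0 ->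
  forall eps, 0 < eps -> exists d, 0 < d /\ forall a, x0 < a < x0 + d -> Rabs (h a - h x0) < eps.
Proof.
  intros C eps he; destruct (proj1 (continuity_pt_locally _ _) C (mkposreal eps he)) as [d Hd].
  exists d; split; [apply cond_pos |]; intros a Ha; apply Hd, Rabs_ball.
  rewrite Rabs_pos_eq; lra.
Qed.

Lemma one_sided_limit_at_continuity f x0 l (side : R) : side = 1 \/ side = -1 ->
  (forall eps, 0 < eps -> exists delta, 0 < delta /\
     forall h, 0 < h < delta -> Rabs (f (x0 + side * h) - l) < eps) ->
  continuity_pt f x0 -> l = f x0.
Proof.
  intros Hside L C; destruct (Req_dec l (f x0)) as [E | E]; [exact E | exfalso].
  set (e := Rabs (l - f x0) / 2).
  assert (he : 0 < e) by (apply Rdiv_lt_0_compat; [apply Rabs_pos_lt; lra | lra]).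
  destruct (L e he) as [d1 [hd1 H1]].
  destruct (proj1 (continuity_pt_locally _ _) C (mkposreal e he)) as [d2 H2].
  set (h := Rmin d1 d2 / 2).
  assert (hh : 0 < h) by (apply Rdiv_lt_0_compat; [apply Rmin_pos; [lra | apply cond_pos] | lra]).
  assert (A : Rabs (f (x0 + side * h) - l) < e) by (apply H1; split; [exact hh |];
    assert (Rmin d1 d2 <= d1) by apply Rmin_l; unfold h; lra).
  assert (B : Rabs (f (x0 + side * h) - f x0) < e).
  { apply H2, Rabs_ball; replace (x0 + side * h - x0) with (side * h) by ring.
    assert (Rmin d1 d2 <= d2) by apply Rmin_r.
    assert (Rabs (side * h) = h)
      by (destruct Hside as [-> | ->]; [rewrite Rmult_1_l, Rabs_pos_eq | rewrite Rabs_left]; lra).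
    simpl; unfold h in *; lra. }
  assert (Rabs (l - f x0) <= Rabs (f (x0 + side * h) - l) + Rabs (f (x0 + side * h) - f x0)).
  { replace (l - f x0) with (- (f (x0 + side * h) - l) + (f (x0 + side * h) - f x0)) by ring.
    rewrite <- (Rabs_Ropp (f (x0 + side * h) - l)); apply Rabs_triang. }
  unfold e in *; lra.
Qed.

Lemma left_lim_continuous f x0 l : left_lim f x0 l -> continuity_pt f x0 -> l = f x0.
Proof.
  intros L; apply (one_sided_limit_at_continuity f x0 l (-1)); [right; reflexivity |].
  intros eps heps; destruct (L eps heps) as [d [hd Hd]]; exists d; split; [exact hd |].
  intros h Hh; apply Hd; lra.
Qed.

Lemma right_lim_continuous f x0 r : right_lim f x0 r -> continuity_pt f x0 -> r = f x0.
Proof.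
  intros L; apply (one_sided_limit_at_continuity f x0 r 1); [left; reflexivity |].
  intros eps heps; destruct (L eps heps) as [d [hd Hd]]; exists d; split; [exact hd |].
  intros h Hh; apply Hd; lra.
Qed.

(** The invariant:
    the variation along a sorted list starting at [x] is at most
    [2 - f x] if [x <= p] and [f x] if [x > p]. *)
Lemma var_list_unimodal f p : (forall x, 0 <= f x <= 1) ->
  (forall x y, x <= y -> y <= p -> f x <= f y) ->
  (forall x y, p <= x -> x <= y -> f y <= f x) ->
  forall l, Sorted Rlt l -> var_list f l <= 2.
Proof.
  intros B I D.
  set (Bd := fun x => if Rle_dec x p then 2 - f x else f x).
  assert (K : forall l x, Sorted Rlt (x :: l) -> var_list f (x :: l) <= Bd x).
  { induction l as [| y l IH]; intros x Hs.
    - simpl; unfold Bd; destruct (Rle_dec x p); specialize (B x); lra.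
    - inversion Hs as [| ? ? Hs' Hh]; subst; inversion Hh; subst.
      change (var_list f (x :: y :: l)) with (Rabs (f y - f x) + var_list f (y :: l)).
      specialize (IH y Hs'); unfold Bd in *.
      assert (Bx := B x); assert (By := B y).
      destruct (Rle_dec y p); destruct (Rle_dec x p); try lra.
      + assert (f x <= f y) by (apply I; lra); rewrite Rabs_pos_eq by lra; lra.
      + destruct (Rle_dec (f x) (f y));
          [rewrite Rabs_pos_eq by lra | rewrite Rabs_left by lra]; lra.
      + assert (f y <= f x) by (apply D; lra); rewrite Rabs_left1 by lra; lra. }
  intros [| x l] Hs; [simpl; lra |].
  eapply Rle_trans; [apply K, Hs |]; unfold Bd; destruct (Rle_dec x p); specialize (B x); lra.
Qed.

(** ** The explicit solution [u_ex] and its datum *)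

Lemma flux_zero g : flux g 0 = 0.
Proof. unfold flux; rewrite powp_of_nonpos by lra; ring. Qed.

Section Solution.

Variable g : R.
Hypothesis hg : 0 < g.

Lemma inv_g_pos : 0 < / g.
Proof. apply Rinv_0_lt_compat, hg. Qed.

Lemma mul_inv_g : g * / g = 1.
Proof. apply Rinv_r; lra. Qed.

Lemma mul_g_lt_one t : t < / g -> g * t < 1.
Proof. intros H; assert (g * t < g * / g) by (apply Rmult_lt_compat_l; assumption); rewrite mul_inv_g in *; lra. Qed.

Lemma datum_formula z : u_I g (fI_ex g) z =
  (if Rle_dec 0 z then (if Rle_dec z (/ g) then powp (g * z) (/ g) else 0) else 0).
Proof.
  unfold u_I, fI_ex, sgn; assert (hig := inv_g_pos); assert (gg := mul_inv_g).
  assert (hi1 : 0 < / (1 + g)) by (apply Rinv_0_lt_compat; lra).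
  assert (he : 0 < (1 + g) / g) by (apply Rdiv_lt_0_compat; lra).
  destruct (Rlt_dec 0 z) as [hz | hz].
  - rewrite Rabs_pos_eq, Rmult_1_l by lra.
    assert (P := powp_nonneg (g * z) ((1 + g) / g)).
    destruct (Rle_dec 0 (/ (1 + g) * powp (g * z) ((1 + g) / g))) as [_ | c];
      [| exfalso; apply c; apply Rmult_le_pos; lra].
    destruct (Rle_dec 0 z) as [_ | c]; [| lra].
    (* [z <= 1/g] iff the argument of [f_I] is at most [1/(1+g)] *)
    destruct (Rle_dec z (/ g)) as [h | h];
      destruct (Rle_dec (/ (1 + g) * powp (g * z) ((1 + g) / g)) (/ (1 + g))) as [c | c];
      try ring; exfalso.
    + apply c; rewrite <- (Rmult_1_r (/ (1 + g))) at 2; apply Rmult_le_compat_l; [lra |].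
      apply powp_le_one; [lra |]; assert (g * z <= g * / g) by (apply Rmult_le_compat_l; lra); lra.
    + assert (g * / g < g * z) by (apply Rmult_lt_compat_l; lra).
      assert (powp 1 ((1 + g) / g) < powp (g * z) ((1 + g) / g)) by (apply powp_lt_base; lra).
      rewrite powp_one_base in *; nra.
  - destruct (Rlt_dec z 0) as [hz' | hz'].
    + (* negative [z]: the argument of [f_I] is negative *)
      destruct (Rle_dec 0 z); [lra |].
      assert (P := powp_pos (g * Rabs z) ((1 + g) / g)
                     ltac:(rewrite Rabs_left by exact hz'; nra)).
      destruct (Rle_dec 0 (-1 * (/ (1 + g) * powp (g * Rabs z) ((1 + g) / g)))); [nra | ring].
    + replace z with 0 by lra; rewrite Rabs_R0, Rmult_0_r, powp_of_nonpos by lra.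
      destruct (Rle_dec 0 0); [| lra]; destruct (Rle_dec 0 (/ g)); [ring | lra].
Qed.

Lemma u_ex_neg x t : x < 0 -> u_ex g x t = 0.
Proof. intros H; unfold u_ex; destruct (Rlt_dec x 0); [reflexivity | lra]. Qed.

Lemma u_ex_beyond x t : 0 <= t -> / g < x -> u_ex g x t = 0.
Proof.
  intros H1 H2; assert (pg := inv_g_pos); unfold u_ex, u_case2.
  destruct (Rlt_dec x 0); [reflexivity |].
  destruct (Rle_dec x (/ g - t)); [lra |].
  destruct (Rle_dec (Rmax 0 (/ g - t)) x); [| reflexivity].
  destruct (Rle_dec x (/ g)); [lra | reflexivity].
Qed.

(** The branch carried by the characteristics issued from the datum, left of
    the separating characteristic [xi = 1/g - t] (for [t < 1/g]). *)
Lemma u_ex_left x t : 0 <= t < / g -> 0 <= x <= / g - t ->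
  u_ex g x t = powp (g * x / (1 - g * t)) (/ g).
Proof.
  intros [h1 h2] [x1 x2]; unfold u_ex.
  destruct (Rlt_dec x 0); [lra |]; destruct (Rle_dec x (/ g - t)); [| lra].
  destruct (Rle_dec 0 t); [| lra]; destruct (Rlt_dec t (/ g)); [reflexivity | lra].
Qed.

(** The rarefaction fan, right of [xi = 1/g - t] (it is zero beyond [1/g],
    where the base of the power is nonpositive). *)
Lemma u_ex_right x t : 0 < t -> 0 <= x -> (/ g - t < x \/ / g <= t) ->
  u_ex g x t = powp ((1 - g * x) / (g * t)) (/ g).
Proof.
  intros h1 hx hc; assert (pg := inv_g_pos).
  assert (C2 : u_case2 g x t = powp ((1 - g * x) / (g * t)) (/ g)).
  { unfold u_case2; destruct (Rle_dec (Rmax 0 (/ g - t)) x) as [r | r].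
    - destruct (Rle_dec x (/ g)); [reflexivity |].
      rewrite powp_of_nonpos; [reflexivity |]; unfold Rdiv; apply Rmult_le_0_r.
      + assert (g * / g < g * x) by (apply Rmult_lt_compat_l; lra); rewrite mul_inv_g in *; lra.
      + left; apply Rinv_0_lt_compat; nra.
    - exfalso; apply r, Rmax_lub; lra. }
  unfold u_ex; destruct (Rlt_dec x 0); [lra |]; destruct (Rle_dec x (/ g - t)); [| exact C2].
  destruct (Rle_dec 0 t); [| lra]; destruct (Rlt_dec t (/ g)); [lra | exact C2].
Qed.

Lemma u_ex_initial x : 0 <= x -> u_ex g x 0 = if Rle_dec x (/ g) then powp (g * x) (/ g) else 0.
Proof.
  intros hx; assert (pg := inv_g_pos); destruct (Rle_dec x (/ g)).
  - rewrite u_ex_left by lra; f_equal; field.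
  - apply u_ex_beyond; lra.
Qed.

Lemma u_ex_left_param s t : 0 <= t < / g -> 0 <= s <= 1 ->
  u_ex g (0 + s * (/ g - t)) t = powp s (/ g).
Proof.
  intros [h1 h2] [s1 s2]; assert (H9 := mul_g_lt_one t h2).
  assert (0 <= s * (/ g - t) <= 1 * (/ g - t)) by (split; [apply Rmult_le_pos | apply Rmult_le_compat_r]; lra).
  rewrite u_ex_left by lra; f_equal; field; lra.
Qed.

Lemma u_ex_right_param s t : 0 < t -> 0 < s < 1 -> 0 <= / g + s * (0 - t) ->
  u_ex g (/ g + s * (0 - t)) t = powp s (/ g).
Proof.
  intros h [s1 s2] h3; assert (s * t < 1 * t) by (apply Rmult_lt_compat_r; lra).
  rewrite u_ex_right by lra; f_equal; field; lra.
Qed.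

Lemma u_ex_bounds x t : 0 <= t -> 0 <= u_ex g x t <= 1.
Proof.
  intros ht; assert (pg := inv_g_pos); assert (gg := mul_inv_g).
  destruct (Rlt_dec x 0); [rewrite u_ex_neg; lra |].
  destruct (Rlt_dec (/ g) x); [rewrite u_ex_beyond; lra |].
  split; [unfold u_ex, u_case2;
          repeat match goal with |- context [if ?c then _ else _] => destruct c end;
          try lra; apply powp_nonneg |].
  destruct (Rle_dec x (/ g - t)) as [h | h].
  - assert (t < / g \/ (t = / g /\ x = 0)) as [h' | [-> ->]] by lra.
    + assert (H9 := mul_g_lt_one t h').
      rewrite u_ex_left by lra; apply powp_le_one; [lra |].
      apply Rmult_le_reg_r with (1 - g * t); [lra |].
      unfold Rdiv; rewrite Rmult_assoc, Rinv_l by lra; nra.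
    + rewrite u_ex_right by lra; apply powp_le_one; [lra |]; right; field; lra.
  - assert (Ht0 : 0 < t) by lra.
    rewrite u_ex_right by lra; apply powp_le_one; [lra |].
    apply Rmult_le_reg_r with (g * t); [nra |].
    unfold Rdiv; rewrite Rmult_assoc, Rinv_l by nra; nra.
Qed.

(** The peak of [u_ex g . t]: the foot of the separating characteristic. *)
Definition peak t := Rmax 0 (/ g - t).

Lemma u_ex_increasing x y t : 0 <= t -> x <= y -> y <= peak t -> u_ex g x t <= u_ex g y t.
Proof.
  intros ht hxy hy; assert (pg := inv_g_pos); unfold peak in hy.
  destruct (Rlt_dec x 0); [rewrite u_ex_neg by assumption; apply u_ex_bounds, ht |].
  destruct (Rlt_dec t (/ g)) as [r | r].
  - rewrite Rmax_right in hy by lra; rewrite !u_ex_left by lra.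
    assert (H9 := mul_g_lt_one t r); apply powp_le_base; [lra |].
    unfold Rdiv; apply Rmult_le_compat_r; [left; apply Rinv_0_lt_compat |]; nra.
  - rewrite Rmax_left in hy by lra; replace x with y by lra; lra.
Qed.

Lemma u_ex_decreasing x y t : 0 <= t -> peak t <= x -> x <= y -> u_ex g y t <= u_ex g x t.
Proof.
  intros ht hx hxy; assert (pg := inv_g_pos); unfold peak in hx.
  assert (h0 : 0 <= x) by (eapply Rle_trans; [apply Rmax_l | exact hx]).
  assert (h1 : / g - t <= x) by (eapply Rle_trans; [apply Rmax_r | exact hx]).
  destruct (Req_dec t 0) as [-> | htn].
  - rewrite !u_ex_initial by lra.
    destruct (Rle_dec y (/ g)); destruct (Rle_dec x (/ g)); try lra.
    + replace x with (/ g) by lra; replace y with (/ g) by lra; lra.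
    + apply powp_nonneg.
  - assert (0 < t) by lra.
    assert (Hr : / g - t < x -> u_ex g y t <= u_ex g x t).
    { intros; rewrite !u_ex_right by lra; apply powp_le_base; [lra |].
      unfold Rdiv; apply Rmult_le_compat_r; [left; apply Rinv_0_lt_compat |]; nra. }
    destruct (Rlt_dec t (/ g)) as [r | r]; [destruct (Req_dec x (/ g - t)) as [e | e] |].
    + (* at the peak the value is 1, the maximum *)
      replace (u_ex g x t) with 1; [apply u_ex_bounds; lra |].
      assert (H9 := mul_g_lt_one t r).
      rewrite u_ex_left, e by lra; replace (g * (/ g - t) / (1 - g * t)) with 1 by (field; lra).
      symmetry; apply powp_one_base.
    + apply Hr; lra.
    + rewrite !u_ex_right by lra; apply powp_le_base; [lra |].
      unfold Rdiv; apply Rmult_le_compat_r; [left; apply Rinv_0_lt_compat |]; nra.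
Qed.

Lemma cont_R_u_left t : cont_R (fun z => powp (g * z / (1 - g * t)) (/ g)).
Proof.
  intros z; apply continuity_pt_ext with (f := fun z => powp (0 + (g / (1 - g * t)) * z) (/ g)).
  - intros y; f_equal; unfold Rdiv; ring.
  - apply cont_R_powp_affine, inv_g_pos.
Qed.

Lemma cont_R_u_right t : cont_R (fun z => powp ((1 - g * z) / (g * t)) (/ g)).
Proof.
  intros z; apply continuity_pt_ext with (f := fun z => powp (/ (g * t) + (- g / (g * t)) * z) (/ g)).
  - intros y; f_equal; unfold Rdiv; ring.
  - apply cont_R_powp_affine, inv_g_pos.
Qed.

(** For [t > 0], [u_ex g . t] is continuous away from [0]; the two branches
    meet continuously (both equal 1) on the separating characteristic. *)
Lemma u_ex_continuous t x0 : 0 < t -> x0 <> 0 -> continuity_pt (fun z => u_ex g z t) x0.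
Proof.
  intros ht hx; assert (pg := inv_g_pos).
  destruct (Rlt_dec x0 0) as [hn | hp].
  { apply (continuity_pt_local _ (fun _ => 0) x0 (- x0)); [lra | | apply cont_R_const].
    intros x Hx; apply u_ex_neg; lra. }
  destruct (Rtotal_order x0 (/ g - t)) as [h | [h | h]].
  - apply (continuity_pt_local _ (fun z => powp (g * z / (1 - g * t)) (/ g)) x0 (Rmin x0 (/ g - t - x0))); [apply Rmin_pos; lra | | apply cont_R_u_left].
    intros x Hx; assert (Rmin x0 (/ g - t - x0) <= x0) by apply Rmin_l.
    assert (Rmin x0 (/ g - t - x0) <= / g - t - x0) by apply Rmin_r.
    apply u_ex_left; lra.
  - assert (tl : t < / g) by lra; assert (H9 := mul_g_lt_one t tl).
    apply (continuity_pt_local _ (fun z => if Rle_dec z (/ g - t)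
             then powp (g * z / (1 - g * t)) (/ g) else powp ((1 - g * z) / (g * t)) (/ g)) x0 x0);
      [lra | intros x Hx; destruct (Rle_dec x (/ g - t)); [apply u_ex_left | apply u_ex_right]; lra |].
    apply (continuity_pt_glue _ (fun z => powp (g * z / (1 - g * t)) (/ g))
             (fun z => powp ((1 - g * z) / (g * t)) (/ g)) x0);
      [| | apply cont_R_u_left | apply cont_R_u_right].
    + intros x Hx; destruct (Rle_dec x (/ g - t)); [reflexivity | lra].
    + intros x Hx; destruct (Rle_dec x (/ g - t)); [| reflexivity].
      replace x with (/ g - t) by lra; f_equal; field; lra.
  - apply (continuity_pt_local _ (fun z => powp ((1 - g * z) / (g * t)) (/ g)) x0 (Rmin x0 (x0 - (/ g - t)))); [apply Rmin_pos; lra | | apply cont_R_u_right].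
    intros x Hx; assert (Rmin x0 (x0 - (/ g - t)) <= x0) by apply Rmin_l.
    assert (Rmin x0 (x0 - (/ g - t)) <= x0 - (/ g - t)) by apply Rmin_r.
    apply u_ex_right; lra.
Qed.

End Solution.

(** ** The weak formulation on [xi > 0] *)

Definition supported_in (phi : R -> R -> R) (a b T : R) : Prop :=
  forall x t, (x < a \/ b < x \/ T < t) -> phi x t = 0.

Lemma test_dx_vanishes phi phix phit a b T x t : C1_test phi phix phit ->
  supported_in phi a b T -> (x < a \/ b < x) -> phix x t = 0.
Proof.
  intros [Dx _] Hv Hx.
  assert (H : is_derive (fun _ => 0) x (phix x t)).
  { apply (is_derive_ext_loc (fun y => phi y t)); [| apply is_derive_Reals, Dx].
    destruct Hx as [Hx | Hx];
      [exists (mkposreal (a - x) ltac:(lra)) | exists (mkposreal (x - b) ltac:(lra))];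
      intros y Hy%ball_bounds; simpl in Hy; apply Hv; lra. }
  apply is_derive_unique in H; rewrite Derive_const in H; auto.
Qed.

Lemma test_dt_vanishes phi phix phit a b T x t : C1_test phi phix phit ->
  supported_in phi a b T -> (x < a \/ b < x) -> phit x t = 0.
Proof.
  intros [_ [Dt _]] Hv Hx.
  assert (H : is_derive (fun _ => 0) t (phit x t)).
  { apply (is_derive_ext_loc (fun s => phi x s)); [| apply is_derive_Reals, Dt].
    exists (mkposreal 1 Rlt_0_1); intros y _; apply Hv; tauto. }
  apply is_derive_unique in H; rewrite Derive_const in H; auto.
Qed.

(** By continuity in time, a test function also vanishes at the final time. *)
Lemma test_vanishes_at_final_time phi phix phit a b T x : C1_test phi phix phit ->
  supported_in phi a b T -> phi x T = 0.
Proof.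
  intros [_ [Dt _]] Hv.
  assert (C : continuity_pt (fun s => phi x s) T)
    by (apply derivable_continuous_pt; exists (phit x T); apply Dt).
  destruct (Req_dec (phi x T) 0) as [E | E]; [exact E | exfalso].
  destruct (proj1 (continuity_pt_locally _ _) C (mkposreal _ (Rabs_pos_lt _ E))) as [[d hd] Hd].
  specialize (Hd (T + d / 2) (Rabs_ball T d _
    ltac:(replace (T + d / 2 - T) with (d / 2) by ring; rewrite Rabs_pos_eq; lra))).
  simpl in Hd; rewrite Hv, Rminus_0_l, Rabs_Ropp in Hd by lra; lra.
Qed.

Section WeakFormulation.

Variable g : R.
Hypothesis hg : 0 < g.
Variables phi phix phit : R -> R -> R.
Hypothesis HC : C1_test phi phix phit.

Let pg := inv_g_pos g hg.

Lemma test_cont2_dx : cont2 phix.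
Proof. destruct HC as [_ [_ [A _]]]; exact A. Qed.

Lemma test_cont2_dt : cont2 phit.
Proof. destruct HC as [_ [_ [_ A]]]; exact A. Qed.

Lemma cont_R_along_line F k m t : cont2 F -> cont_R (fun s => F (k + s * (m - t)) t).
Proof.
  intros H; apply (cont_R_comp (fun s => k + s * (m - t)) (fun y => F y t));
    [apply cont_R_affine | intros y; apply cont2_first, H].
Qed.

Lemma cont_R_test_along_line k m t : cont_R (fun s => phi (k + s * (m - t)) t).
Proof.
  destruct HC as [Dx _].
  apply (cont_R_comp (fun s => k + s * (m - t)) (fun y => phi y t)); [apply cont_R_affine |].
  intros y; apply derivable_continuous_pt; exists (phix y t); apply Dx.
Qed.

Lemma cont_R_weighted k m t r F : 0 < r -> cont2 F ->
  cont_R (fun s => powp s r * F (k + s * (m - t)) t).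
Proof. intros Hr HF; apply cont_R_mult; [apply cont_R_powp, Hr | apply cont_R_along_line, HF]. Qed.

(** Along the segment [s |-> k + s (m - t)], [s] in [[0, 1]], at time [t],
    with the weight [u = s^(1/g)]: the mass of [phi], and the moments of
    [phi_t] and [u phi_xi]. *)
Definition line_mass k m t := RInt (fun s => powp s (/ g) * phi (k + s * (m - t)) t) 0 1.
Definition line_dt k m t := RInt (fun s => powp s (/ g) * phit (k + s * (m - t)) t) 0 1.
Definition line_dx k m t := RInt (fun s => powp s (/ g + 1) * phix (k + s * (m - t)) t) 0 1.

(** Differentiation under the integral sign. *)
Lemma line_mass_derivative k m t : is_derive (line_mass k m) t (line_dt k m t - line_dx k m t).
Proof.
  set (f := fun u s => powp s (/ g) * phi (k + s * (m - u)) u).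
  set (D := fun u s => powp s (/ g) *
              (phix (k + s * (m - u)) u * (- s) + phit (k + s * (m - u)) u)).
  assert (HD : forall u s, is_derive (fun z => f z s) u (D u s))
    by (intros u s; apply is_derive_Reals, derivable_pt_lim_scal, C1_derivative_along_line, HC).
  assert (HDe : forall u s, Derive (fun z => f z s) u = D u s)
    by (intros; apply is_derive_unique, HD).
  replace (line_dt k m t - line_dx k m t) with (RInt (fun s => Derive (fun u => f u s) t) 0 1).
  - apply (is_derive_RInt_param f 0 1 t).
    + exists (mkposreal 1 Rlt_0_1); intros y _ s _; exists (D y s); apply HD.
    + intros s _; apply continuity_2d_pt_ext with (f := D); [intros; rewrite HDe; reflexivity |].
      apply continuity_2d_pt_mult; [apply cont_2d_of_second, powp_continuous, pg |].
      apply continuity_2d_pt_plus; [apply continuity_2d_pt_mult |];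
        [apply cont2_along_line, test_cont2_dx |
         apply continuity_2d_pt_opp, continuity_2d_pt_id2 |
         apply cont2_along_line, test_cont2_dt].
    + exists (mkposreal 1 Rlt_0_1); intros y _; apply cont_R_ex_RInt, cont_R_mult;
        [apply cont_R_powp, pg | apply cont_R_test_along_line].
  - rewrite (RInt_ext _ (fun s => 1 * (powp s (/ g) * phit (k + s * (m - t)) t)
                                  + (-1) * (powp s (/ g + 1) * phix (k + s * (m - t)) t))).
    + rewrite RInt_lin2; [unfold line_dt, line_dx; ring_R | |];
        apply cont_R_weighted; auto using test_cont2_dt, test_cont2_dx; lra.
    + intros s Hs; rewrite Rmin_left, Rmax_right in Hs by lra; rewrite HDe; unfold D.
      rewrite powp_add_exp, powp_one_exp by lra; ring_R.
Qed.

(** Integration by parts of [s^(1/g+1) d/ds phi(k + s (m - t), t)]. *)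
Lemma line_dx_by_parts k m t :
  (m - t) * line_dx k m t = phi (k + (m - t)) t - (/ g + 1) * line_mass k m t.
Proof.
  set (F := fun s => powp s (/ g + 1) * phi (k + s * (m - t)) t).
  set (dF := fun s => (/ g + 1) * (powp s (/ g) * phi (k + s * (m - t)) t)
                      + (m - t) * (powp s (/ g + 1) * phix (k + s * (m - t)) t)).
  assert (H : is_RInt dF 0 1 (F 1 - F 0)).
  { apply is_RInt_antiderivative; [lra | |].
    - intros x; apply is_derive_Reals; unfold F, dF.
      assert (A1 := powp_derivative (/ g + 1) x ltac:(lra)).
      assert (A2 : derivable_pt_lim (fun s => phi (k + s * (m - t)) t) x
                     (phix (k + x * (m - t)) t * (m - t))).
      { apply (derivable_pt_lim_comp (fun s => k + s * (m - t)) (fun y => phi y t) x (m - t));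
          [apply affine_derivative | destruct HC as [Dx _]; apply Dx]. }
      assert (A3 := derivable_pt_lim_mult _ _ _ _ _ A1 A2); unfold mult_fct in A3.
      replace (/ g + 1 - 1) with (/ g) in A3 by ring.
      replace ((/ g + 1) * (powp x (/ g) * phi (k + x * (m - t)) t)
                 + (m - t) * (powp x (/ g + 1) * phix (k + x * (m - t)) t))
        with ((/ g + 1) * powp x (/ g) * phi (k + x * (m - t)) t
                 + powp x (/ g + 1) * (phix (k + x * (m - t)) t * (m - t))) by ring.
      exact A3.
    - apply cont_R_plus; apply cont_R_mult; try apply cont_R_const.
      + apply cont_R_mult; [apply cont_R_powp, pg | apply cont_R_test_along_line].
      + apply cont_R_weighted; [lra | apply test_cont2_dx]. }
  apply (is_RInt_unique (V := R_CompleteNormedModule)) in H; unfold dF in H.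
  rewrite RInt_lin2 in H;
    [| apply cont_R_mult; [apply cont_R_powp, pg | apply cont_R_test_along_line]
     | apply cont_R_weighted; [lra | apply test_cont2_dx]].
  unfold F in H; rewrite powp_one_base, (powp_of_nonpos 0), !Rmult_1_l in H by lra.
  unfold line_dx, line_mass; lra.
Qed.

(** The weak-formulation integrand [u phi_t - F(u) phi_xi] along the segment,
    with [u = s^(1/g)]. *)
Definition line_integrand k m t s :=
  powp s (/ g) * phit (k + s * (m - t)) t
  + (-1) * flux g (powp s (/ g)) * phix (k + s * (m - t)) t.

(** The mass [int_0^oo u phi dxi] at time [t], split along the two
    characteristic parametrisations, and its claimed time derivative. *)
Definition mass t := (/ g - t) * line_mass 0 (/ g) t + t * line_mass (/ g) 0 t.
Definition mass_rate t :=
  (/ g - t) * RInt (line_integrand 0 (/ g) t) 0 1 + t * RInt (line_integrand (/ g) 0 t) 0 1.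

Lemma flux_of_profile s : flux g (powp s (/ g)) = / (1 + g) * powp s (/ g + 1).
Proof. unfold flux; rewrite powp_powp; do 2 f_equal; field; lra. Qed.

Lemma cont_R_line_integrand k m t : cont_R (line_integrand k m t).
Proof.
  intros s; apply continuity_pt_ext with
    (f := fun s => 1 * (powp s (/ g) * phit (k + s * (m - t)) t)
                   + (- / (1 + g)) * (powp s (/ g + 1) * phix (k + s * (m - t)) t)).
  - intros y; unfold line_integrand; rewrite flux_of_profile; ring.
  - apply cont_R_plus; apply cont_R_mult; try apply cont_R_const;
      apply cont_R_weighted; auto using test_cont2_dt, test_cont2_dx; lra.
Qed.

Lemma RInt_line_integrand k m t :
  RInt (line_integrand k m t) 0 1 = line_dt k m t - / (1 + g) * line_dx k m t.
Proof.
  rewrite (RInt_ext _ (fun s => 1 * (powp s (/ g) * phit (k + s * (m - t)) t)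
                                + (- / (1 + g)) * (powp s (/ g + 1) * phix (k + s * (m - t)) t))).
  - rewrite RInt_lin2; [unfold line_dt, line_dx; ring_R | |];
      apply cont_R_weighted; auto using test_cont2_dt, test_cont2_dx; lra.
  - intros s _; unfold line_integrand; rewrite flux_of_profile; ring_R.
Qed.

(** [mass' = mass_rate]: the two boundary terms of the integrations by parts
    cancel, since both segments end at the same point [1/g - t]. *)
Lemma mass_derivative t : is_derive mass t (mass_rate t).
Proof.
  assert (H1 : is_derive (fun t => (/ g - t) * line_mass 0 (/ g) t) t
                 (-1 * line_mass 0 (/ g) t + (/ g - t) * (line_dt 0 (/ g) t - line_dx 0 (/ g) t))).
  { apply is_derive_Reals, (derivable_pt_lim_mult (fun t => / g - t) (line_mass 0 (/ g))).
    - replace (-1) with (0 - 1) by ring.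
      apply derivable_pt_lim_minus; [apply derivable_pt_lim_const | apply derivable_pt_lim_id].
    - apply is_derive_Reals, line_mass_derivative. }
  assert (H2 : is_derive (fun t => t * line_mass (/ g) 0 t) t
                 (1 * line_mass (/ g) 0 t + t * (line_dt (/ g) 0 t - line_dx (/ g) 0 t))).
  { apply is_derive_Reals, (derivable_pt_lim_mult (fun t => t) (line_mass (/ g) 0));
      [apply derivable_pt_lim_id | apply is_derive_Reals, line_mass_derivative]. }
  assert (H3 := is_derive_plus _ _ _ _ _ H1 H2); unfold mass.
  match type of H3 with is_derive _ _ ?v => replace (mass_rate t) with v; [exact H3 |] end.
  unfold mass_rate; rewrite !RInt_line_integrand.
  assert (E1 := line_dx_by_parts 0 (/ g) t); assert (E2 := line_dx_by_parts (/ g) 0 t).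
  replace (0 + (/ g - t)) with (/ g - t) in E1 by ring.
  replace (/ g + (0 - t)) with (/ g - t) in E2 by ring.
  unfold plus; simpl.
  set (pa := line_mass 0 (/ g) t) in *; set (pb := line_mass (/ g) 0 t) in *.
  set (xa := line_dx 0 (/ g) t) in *; set (xb := line_dx (/ g) 0 t) in *.
  set (ta := line_dt 0 (/ g) t) in *; set (tb := line_dt (/ g) 0 t) in *.
  set (c := phi (/ g - t) t) in *.
  replace ((/ g - t) * (ta - / (1 + g) * xa) + t * (tb - / (1 + g) * xb))
    with ((/ g - t) * ta + t * tb - / (1 + g) * ((/ g - t) * xa) + / (1 + g) * ((0 - t) * xb)) by ring.
  replace (-1 * pa + (/ g - t) * (ta - xa) + (1 * pb + t * (tb - xb)))
    with (-1 * pa + (/ g - t) * ta - (/ g - t) * xa + (1 * pb + t * tb + (0 - t) * xb)) by ring.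
  rewrite E1, E2; field; lra.
Qed.

Lemma mass_rate_continuous t : continuity_pt mass_rate t.
Proof.
  assert (C : forall k m, continuity_pt (fun t => RInt (line_integrand k m t) 0 1) t).
  { intros k m; apply (RInt_param_continuous (fun s t => line_integrand k m t s) 0 1 t);
      [lra | | intros t'; apply cont_R_ex_RInt, cont_R_line_integrand].
    intros s _; apply (cont_2d_swap (fun u v => line_integrand k m u v)); unfold line_integrand.
    assert (Cflux : continuity_pt (fun s => flux g (powp s (/ g))) s).
    { apply (cont_R_comp (fun s => powp s (/ g)) (flux g)); [apply cont_R_powp, pg |].
      unfold flux; apply cont_R_mult; [apply cont_R_const | apply cont_R_powp; lra]. }
    apply continuity_2d_pt_plus; apply continuity_2d_pt_mult.
    - apply cont_2d_of_second, powp_continuous, pg.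
    - apply cont2_along_line, test_cont2_dt.
    - apply continuity_2d_pt_mult; [apply continuity_2d_pt_const | apply cont_2d_of_second, Cflux].
    - apply cont2_along_line, test_cont2_dx. }
  unfold mass_rate; apply continuity_pt_plus; apply continuity_pt_mult; auto.
  - apply continuity_pt_minus; [apply continuity_pt_const; intros a b; reflexivity | apply continuity_pt_id].
  - apply continuity_pt_id.
Qed.

Lemma mass_FTC T : is_RInt mass_rate 0 T (mass T - mass 0).
Proof.
  apply (is_RInt_derive (V := R_CompleteNormedModule) mass mass_rate); intros x _;
    [apply mass_derivative | apply continuity_pt_filterlim, mass_rate_continuous].
Qed.

End WeakFormulation.

Section PositiveHalfLine.

Variable g : R.
Hypothesis hg : 0 < g.
Variables phi phix phit : R -> R -> R.
Hypothesis HC : C1_test phi phix phit.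
Variables a b T : R.
Hypothesis hab : a < b.
Hypothesis ha : 0 < a.
Hypothesis Hsupp : supported_in phi a b T.

Let pg := inv_g_pos g hg.

Lemma mass_at_final_time : mass g phi T = 0.
Proof.
  assert (Z : forall k m, line_mass g phi k m T = 0).
  { intros k m; unfold line_mass; rewrite (RInt_ext _ (fun _ => 0)).
    - rewrite RInt_const; unfold scal; simpl; unfold mult; simpl; ring_R.
    - intros s _; rewrite (test_vanishes_at_final_time phi phix phit a b T) by assumption; ring_R. }
  unfold mass; rewrite !Z; ring.
Qed.

Definition weak_integrand t x := u_ex g x t * phit x t + -1 * flux g (u_ex g x t) * phix x t.

Lemma weak_integrand_outside t x : x < a \/ b < x -> weak_integrand t x = 0.
Proof.
  intros Hx; unfold weak_integrand.
  rewrite (test_dt_vanishes phi phix phit a b T x t), (test_dx_vanishes phi phix phit a b T x t)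
    by auto; ring.
Qed.

(** Substituting [xi = s (1/g - t)] on the left segment ... *)
Lemma weak_integrand_left_segment t : 0 <= t ->
  is_RInt (weak_integrand t) 0 (0 + (/ g - t))
    ((/ g - t) * RInt (line_integrand g phix phit 0 (/ g) t) 0 1).
Proof.
  intros ht0; apply is_RInt_affine_subst; intros _.
  apply (is_RInt_ext (V := R_NormedModule) (line_integrand g phix phit 0 (/ g) t));
    [| apply (RInt_correct (V := R_CompleteNormedModule)), cont_R_ex_RInt,
       (cont_R_line_integrand g hg phi phix phit HC)].
  intros s Hs; rewrite Rmin_left, Rmax_right in Hs by lra.
  destruct (Rlt_dec t (/ g)) as [hlt | hge].
  - unfold line_integrand, weak_integrand; rewrite u_ex_left_param by (auto; lra); reflexivity.
  - assert (s * (/ g - t) <= 0) by (apply Rmult_le_0_l; lra).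
    rewrite weak_integrand_outside by lra; unfold line_integrand.
    rewrite (test_dt_vanishes phi phix phit a b T _ t), (test_dx_vanishes phi phix phit a b T _ t)
      by (auto; left; lra); ring_R.
Qed.

(** ... and [xi = 1/g - s t] on the right segment (the fan). *)
Lemma weak_integrand_right_segment t : 0 <= t ->
  is_RInt (weak_integrand t) (/ g) (/ g + - t)
    (- t * RInt (line_integrand g phix phit (/ g) 0 t) 0 1).
Proof.
  intros ht0; apply is_RInt_affine_subst; intros hd.
  apply (is_RInt_ext (V := R_NormedModule) (line_integrand g phix phit (/ g) 0 t));
    [| apply (RInt_correct (V := R_CompleteNormedModule)), cont_R_ex_RInt,
       (cont_R_line_integrand g hg phi phix phit HC)].
  intros s Hs; rewrite Rmin_left, Rmax_right in Hs by lra.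
  replace (/ g + s * - t) with (/ g + s * (0 - t)) by ring.
  destruct (Rle_dec 0 (/ g + s * (0 - t))) as [hp | hn].
  - unfold line_integrand, weak_integrand; rewrite u_ex_right_param by (auto; lra); reflexivity.
  - rewrite weak_integrand_outside by lra; unfold line_integrand.
    rewrite (test_dt_vanishes phi phix phit a b T _ t), (test_dx_vanishes phi phix phit a b T _ t)
      by (auto; left; lra); ring_R.
Qed.

Lemma weak_integrand_at_time t : 0 <= t ->
  is_RInt (fun x => u_ex g x t * phit x t + -1 * flux g (u_ex g x t) * phix x t) a b
    (mass_rate g phix phit t).
Proof.
  intros ht0; change (is_RInt (weak_integrand t) a b (mass_rate g phix phit t)).
  apply (is_RInt_support (weak_integrand t) a b 0 (/ g)); try lra.
  - intros x Hx; apply weak_integrand_outside; left; exact Hx.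
  - intros x Hx; apply weak_integrand_outside; right; exact Hx.
  - intros x Hx; unfold weak_integrand; rewrite u_ex_neg, flux_zero by assumption; ring.
  - intros x Hx; unfold weak_integrand; rewrite u_ex_beyond, flux_zero by (auto; lra); ring.
  - assert (A1 := weak_integrand_left_segment t ht0).
    assert (A2 := is_RInt_swap (V := R_NormedModule) _ _ _ _ (weak_integrand_right_segment t ht0)).
    replace (0 + (/ g - t)) with (/ g + - t) in A1 by ring.
    assert (A3 := is_RInt_Chasles _ _ _ _ _ _ A1 A2).
    match type of A3 with is_RInt _ _ _ ?v => replace (mass_rate g phix phit t) with v; [exact A3 |] end.
    unfold mass_rate, plus, opp; simpl; ring.
Qed.

(** The datum term is the initial mass: substitute [xi = s / g]. *)
Lemma datum_term : is_RInt (fun x => u_I g (fI_ex g) x * phi x 0) a b (mass g phi 0).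
Proof.
  set (Y := fun x => u_I g (fI_ex g) x * phi x 0).
  assert (Zab : forall x, (x < a \/ b < x) -> Y x = 0)
    by (intros x Hx; unfold Y; rewrite Hsupp by tauto; ring).
  apply (is_RInt_support Y a b 0 (/ g)); auto; try lra.
  - intros x Hx; unfold Y; rewrite datum_formula by exact hg.
    destruct (Rle_dec 0 x); [lra | ring].
  - intros x Hx; unfold Y; rewrite datum_formula by exact hg.
    destruct (Rle_dec 0 x); [destruct (Rle_dec x (/ g)); [lra |] |]; ring.
  - replace (mass g phi 0) with (/ g * line_mass g phi 0 (/ g) 0) by (unfold mass; ring).
    rewrite <- (Rplus_0_l (/ g)) at 1; apply is_RInt_affine_subst; intros _.
    unfold line_mass; apply (is_RInt_ext (V := R_NormedModule)
                               (fun s => powp s (/ g) * phi (0 + s * (/ g - 0)) 0)).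
    + intros s Hs; rewrite Rmin_left, Rmax_right in Hs by lra; unfold Y.
      rewrite datum_formula, Rminus_0_r by exact hg.
      assert (0 < s * / g <= 1 * / g) by (split; [apply Rmult_lt_0_compat | apply Rmult_le_compat_r]; lra).
      destruct (Rle_dec 0 (0 + s * / g)); [| lra].
      destruct (Rle_dec (0 + s * / g) (/ g)); [| lra].
      replace (g * (0 + s * / g)) with s by (field; lra); reflexivity.
    + apply (RInt_correct (V := R_CompleteNormedModule)), cont_R_ex_RInt, cont_R_mult;
        [apply cont_R_powp, pg | apply (cont_R_test_along_line phi phix phit HC)].
Qed.

End PositiveHalfLine.

(** [u_ex] is a weak solution on [xi > 0]: the time integral of the
    [xi]-integrals is [mass T - mass 0 = - mass 0], the opposite of the datum
    term. *)
Lemma weak_solution_positive g (hg : 0 < g) :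
  weak_sol g (fun x => 0 < x) (-1) (u_I g (fI_ex g)) (u_ex g).
Proof.
  intros phi phix phit a b T HC hab hT HD Hv.
  assert (ha : 0 < a) by (apply HD; lra).
  exists (mass_rate g phix phit), (mass g phi T - mass g phi 0), (mass g phi 0).
  split; [| split; [| split]].
  - intros t [ht0 _]; apply is_RInt_Riemann; eapply weak_integrand_at_time; eauto.
  - apply is_RInt_Riemann; eapply mass_FTC; eauto.
  - apply is_RInt_Riemann; eapply datum_term; eauto.
  - erewrite mass_at_final_time; eauto; ring.
Qed.

(** On [xi < 0] both the solution and the datum vanish. *)
Lemma weak_solution_negative g (hg : 0 < g) :
  weak_sol g (fun x => x < 0) 1 (u_I g (fI_ex g)) (u_ex g).
Proof.
  intros phi phix phit a b T HC hab hT HD Hv.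
  exists (fun _ => 0), 0, 0; split; [| split; [| split]]; try ring;
    try (intros t _); apply is_RInt_Riemann, is_RInt_vanishing; intros x Hx;
    rewrite ?Rmin_left, ?Rmax_right in Hx by lra.
  - rewrite u_ex_neg, flux_zero by (apply HD; lra); ring.
  - reflexivity.
  - rewrite datum_formula by exact hg; destruct (Rle_dec 0 x); [| ring].
    assert (x < 0) by (apply HD; lra); lra.
Qed.

(** ** Bounds and the entropy condition *)

Section EntropyConditions.

Variable g : R.
Hypothesis hg : 0 < g.

Let pg := inv_g_pos g hg.

Lemma u_ex_integrable t : 0 <= t -> ex_RInt (fun z => u_ex g z t) 0 (/ g).
Proof.
  intros ht.
  assert (Left : forall c, 0 <= c <= / g - t -> t < / g -> ex_RInt (fun z => u_ex g z t) 0 c).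
  { intros c hc tl.
    apply (ex_RInt_ae _ (fun z => powp (g * z / (1 - g * t)) (/ g))); [lra | | apply cont_R_u_left, hg].
    intros x Hx; apply u_ex_left; lra. }
  assert (Right : forall c, c <= / g -> 0 <= c -> (/ g - t <= c \/ / g <= t) -> 0 < t ->
             ex_RInt (fun z => u_ex g z t) c (/ g)).
  { intros c hc hc0 hct ht0.
    apply (ex_RInt_ae _ (fun z => powp ((1 - g * z) / (g * t)) (/ g))); [lra | | apply cont_R_u_right, hg].
    intros x Hx; apply u_ex_right; [exact hg | lra | lra | lra]. }
  destruct (Rlt_dec t (/ g)) as [tl | tl]; [destruct (Req_dec t 0) as [-> | htn] |].
  - apply Left; lra.
  - apply (ex_RInt_Chasles (V := R_CompleteNormedModule) _ _ (/ g - t)); [apply Left | apply Right]; lra.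
  - apply Right; lra.
Qed.

(** The mass of [u_ex g . t] on any interval is at most [1/g]: [u] is
    supported in [[0, 1/g]] and bounded by [1]. *)
Lemma u_ex_L1_bound t a b : 0 <= t -> a < b ->
  exists I, Defs.is_RInt (fun z => Rabs (u_ex g z t)) a b I /\ I <= / g.
Proof.
  intros ht hab; set (h := fun z => u_ex g z t).
  assert (hpos : forall z, 0 <= h z) by (intros z; apply u_ex_bounds; auto).
  set (L := Rmin a 0); set (R0 := Rmax b (/ g)).
  assert (hLa : L <= a) by apply Rmin_l; assert (hL0 : L <= 0) by apply Rmin_r.
  assert (hbR : b <= R0) by apply Rmax_l; assert (hgR : / g <= R0) by apply Rmax_r.
  assert (Hsupp : is_RInt h L R0 (RInt h 0 (/ g))).
  { apply (is_RInt_support h L R0 0 (/ g)); try lra.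
    - intros x Hx; apply u_ex_neg; lra.
    - intros x Hx; apply u_ex_beyond; auto; lra.
    - intros x Hx; apply u_ex_neg; lra.
    - intros x Hx; apply u_ex_beyond; auto; lra.
    - apply (RInt_correct (V := R_CompleteNormedModule)), u_ex_integrable, ht. }
  assert (E : ex_RInt h L R0) by (eexists; exact Hsupp).
  assert (Eab : ex_RInt h a b)
    by (apply (ex_RInt_Chasles_2 h L a b); [lra | apply (ex_RInt_Chasles_1 h L b R0); [lra | exact E]]).
  exists (RInt h a b); split.
  - apply is_RInt_Riemann, (is_RInt_ext (V := R_NormedModule) h);
      [intros x _; unfold h; rewrite Rabs_pos_eq; [reflexivity | apply hpos] |
       apply (RInt_correct (V := R_CompleteNormedModule)), Eab].
  - apply Rle_trans with (RInt h L R0); [apply RInt_nonneg_subinterval; auto; lra |].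
    rewrite (is_RInt_unique (V := R_CompleteNormedModule) _ _ _ _ Hsupp).
    apply Rle_trans with ((/ g - 0) * 1); [| lra].
    eapply Rle_trans; [apply Rle_abs |]; apply abs_RInt_le_const; [lra | apply u_ex_integrable, ht |].
    intros z _; rewrite Rabs_pos_eq by apply hpos; apply u_ex_bounds; assumption.
Qed.

Lemma u_ex_L1BV t : 0 <= t -> L1BV_bound (fun z => u_ex g z t) (2 + / g).
Proof.
  intros ht; split.
  - intros a b hab; destruct (u_ex_L1_bound t a b ht hab) as [I [H1 H2]]; exists I; split; [exact H1 | lra].
  - intros l Hl; eapply Rle_trans; [apply (var_list_unimodal _ (peak g t)) | lra]; try exact Hl.
    + intros x; apply u_ex_bounds; assumption.
    + intros x y; apply u_ex_increasing; auto.
    + intros x y; apply u_ex_decreasing; auto.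
Qed.

(** The one-sided limit condition: away from [xi = 0] the profile is
    continuous for [t > 0], so left and right limits coincide. *)
Lemma u_ex_one_sided_limits t : 0 < t -> forall x0 l r,
  left_lim (fun z => u_ex g z t) x0 l -> right_lim (fun z => u_ex g z t) x0 r ->
  (x0 < 0 -> r <= l) /\ (0 < x0 -> l <= r).
Proof.
  intros ht x0 l r L Rr; split; intros hx;
    assert (C := u_ex_continuous g hg t x0 ht ltac:(lra));
    rewrite (left_lim_continuous _ _ _ L C), (right_lim_continuous _ _ _ Rr C); lra.
Qed.

End EntropyConditions.

Lemma u_ex_entropy_solution g (hg : 0 < g) :
  entropy_solution g (u_I g (fI_ex g)) (u_ex g).
Proof.
  split; [exists (2 + / g); intros t ht; apply u_ex_L1BV; assumption |].
  split; [apply weak_solution_positive, hg |].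
  split; [apply weak_solution_negative, hg |].
  intros t ht; apply u_ex_one_sided_limits; assumption.
Qed.

(** ** The change of variables [xi(x)] and the density [rho] *)

Section ChangeOfVariables.

Variable g : R.
Hypothesis hg : 0 < g.

(** [xi] on [x > 0]: [xi(x) = Y(x) / g] with [Y(x) = ((1+g) x)^(g/(1+g))]. *)
Definition Ypow x := powp ((1 + g) * x) (g / (1 + g)).

Lemma Ypow_pos x : 0 < x -> 0 < Ypow x.
Proof. intros; apply powp_pos; nra. Qed.

Lemma xi_of_pos x : 0 < x -> xi g x = Ypow x / g.
Proof.
  intros H; unfold xi, Ypow, sgn; destruct (Rlt_dec 0 x); [| lra].
  rewrite Rabs_pos_eq by lra; field; lra.
Qed.

Lemma xi_of_neg x : x < 0 -> xi g x = - (Ypow (- x) / g).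
Proof.
  intros H; unfold xi, Ypow, sgn; destruct (Rlt_dec 0 x); [lra |]; destruct (Rlt_dec x 0); [| lra].
  rewrite Rabs_left by lra; field; lra.
Qed.

Lemma xi_pos x : 0 < x -> 0 < xi g x.
Proof. intros; rewrite xi_of_pos by assumption; apply Rdiv_lt_0_compat; [apply Ypow_pos |]; assumption. Qed.

Lemma Ypow_over_g_derivative x : 0 < x ->
  derivable_pt_lim (fun y => Ypow y / g) x (powp ((1 + g) * x) (- / (1 + g))).
Proof.
  intros hx; unfold Ypow.
  assert (L := derivable_pt_lim_scal id (1 + g) x 1 (derivable_pt_lim_id x)).
  unfold mult_real_fct, id in L; rewrite Rmult_1_r in L.
  assert (D := derivable_pt_lim_comp (fun y => (1 + g) * y) (fun s => powp s (g / (1 + g))) x _ _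
                 L (powp_derivative_pos (g / (1 + g)) ((1 + g) * x) ltac:(nra))).
  apply (derivable_pt_lim_scal _ (/ g)) in D; unfold comp, mult_real_fct in D.
  replace (powp ((1 + g) * x) (- / (1 + g)))
    with (/ g * (g / (1 + g) * powp ((1 + g) * x) (g / (1 + g) - 1) * (1 + g)))
    by (replace (g / (1 + g) - 1) with (- / (1 + g)) by (field; lra); field; lra).
  apply (derivable_pt_lim_ext _ _ _ _ (fun y => Rmult_comm _ _)) in D.
  exact D.
Qed.

Lemma xi_derivative x : x <> 0 -> derivable_pt_lim (xi g) x (dxi g x).
Proof.
  intros hx; unfold dxi; destruct (Rlt_dec 0 x) as [p | p].
  - rewrite Rabs_pos_eq by lra; apply is_derive_Reals.
    apply (is_derive_ext_loc (fun y => Ypow y / g)); [| apply is_derive_Reals, Ypow_over_g_derivative, p].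
    exists (mkposreal x p); intros y Hy%ball_bounds; simpl in Hy; symmetry; apply xi_of_pos; lra.
  - rewrite Rabs_left by lra; apply is_derive_Reals.
    apply (is_derive_ext_loc (fun y => - (Ypow (- y) / g))).
    + exists (mkposreal (- x) ltac:(lra)); intros y Hy%ball_bounds; simpl in Hy.
      symmetry; apply xi_of_neg; lra.
    + apply is_derive_Reals.
      assert (D := derivable_pt_lim_comp (fun y => - y) (fun y => Ypow y / g) x (-1) _
                     ltac:(replace (-1) with (- (1)) by ring; apply derivable_pt_lim_opp, derivable_pt_lim_id)
                     (Ypow_over_g_derivative (- x) ltac:(lra))).
      apply derivable_pt_lim_opp in D; unfold comp, opp_fct in D.
      replace (powp ((1 + g) * - x) (- / (1 + g)))
        with (- (powp ((1 + g) * - x) (- / (1 + g)) * -1)) by ring.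
      exact D.
Qed.

Lemma rho_negative x t : x < 0 -> 0 <= t -> rho g x t = 0.
Proof.
  intros hx ht; unfold rho; rewrite u_ex_neg; [ring |].
  rewrite xi_of_neg by exact hx; assert (0 < Ypow (- x) / g) by (apply Rdiv_lt_0_compat; [apply Ypow_pos |]; lra).
  lra.
Qed.

(** The thresholds of [rho_ex] in terms of [Y]:
    [x <= w^((1+g)/g) / (1+g)] iff [Y(x) <= w]. *)
Lemma Ypow_le_iff x w : 0 < x -> 0 < w -> (x <= powp w ((1 + g) / g) / (1 + g) <-> Ypow x <= w).
Proof.
  intros hx hw; unfold Ypow.
  assert (he1 : 0 <= (1 + g) / g) by (apply Rlt_le, Rdiv_lt_0_compat; lra).
  assert (he2 : 0 <= g / (1 + g)) by (apply Rlt_le, Rdiv_lt_0_compat; lra).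
  assert (Inv : forall y a c, 0 <= y -> a * c = 1 -> powp (powp y a) c = y)
    by (intros y a c hy hac; rewrite powp_powp, hac; apply powp_one_exp, hy).
  split; intros H.
  - rewrite <- (Inv w ((1 + g) / g) (g / (1 + g))) by (try lra; field; lra).
    apply powp_le_base; [exact he2 |].
    apply Rmult_le_reg_l with (/ (1 + g)); [apply Rinv_0_lt_compat; lra |].
    rewrite <- Rmult_assoc, Rinv_l, Rmult_1_l by lra; unfold Rdiv in H; lra.
  - apply (powp_le_base _ _ ((1 + g) / g) he1) in H.
    rewrite Inv in H by (try nra; field; lra).
    apply Rmult_le_reg_l with (1 + g); [lra |]; unfold Rdiv; rewrite <- Rmult_assoc, Rinv_r_simpl_m by lra.
    exact H.
Qed.

Lemma dxi_of_pos x : 0 < x -> dxi g x = powp (Ypow x) (- / g).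
Proof.
  intros hx; unfold dxi, Ypow; rewrite Rabs_pos_eq by lra; rewrite powp_powp; f_equal; field; lra.
Qed.

Lemma rho_of_pos x t : 0 < x -> rho g x t = powp (Ypow x) (- / g) * u_ex g (Ypow x / g) t.
Proof. intros hx; unfold rho; rewrite dxi_of_pos, xi_of_pos by exact hx; reflexivity. Qed.

(** Position of [xi(x) = Y / g] relative to the separating characteristic
    [xi = 1/g - t]. *)
Lemma separatrix_le_iff Y t : Y / g <= / g - t <-> Y <= 1 - g * t.
Proof.
  replace (/ g - t) with ((1 - g * t) / g) by (field; lra).
  assert (hig : 0 < / g) by (apply Rinv_0_lt_compat; lra).
  split; intros H.
  - apply Rmult_le_reg_r with (/ g); [exact hig | exact H].
  - unfold Rdiv; apply Rmult_le_compat_r; [left; exact hig | exact H].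
Qed.

Lemma rho_ex_threshold t :
  powp (Rmax 0 (1 - g * t)) ((1 + g) / g) / (1 + g) = powp (1 - g * t) ((1 + g) / g) / (1 + g).
Proof.
  destruct (Rle_dec (1 - g * t) 0);
    [rewrite Rmax_left, !powp_of_nonpos by lra | rewrite Rmax_right by lra]; reflexivity.
Qed.

Lemma rho_ex_under x t : 0 < x -> 0 <= t -> Ypow x <= 1 - g * t ->
  rho_ex g x t = powp (1 - g * t) (- / g).
Proof.
  intros hx ht A; assert (hY := Ypow_pos x hx).
  assert (tl : t < / g) by (apply Rmult_lt_reg_l with g; [| rewrite Rinv_r]; lra).
  assert (xB := proj2 (Ypow_le_iff x (1 - g * t) hx ltac:(lra)) A).
  unfold rho_ex; destruct (Rle_dec x 0); [lra |]; destruct (Rle_dec x _); [| lra].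
  destruct (Rle_dec 0 t); [| lra]; destruct (Rlt_dec t (/ g)); [reflexivity | lra].
Qed.

Lemma rho_ex_over x t : 0 < x -> 0 <= t -> ~ Ypow x <= 1 - g * t ->
  rho_ex g x t =
    if Rle_dec x (/ (1 + g)) then powp ((/ Ypow x - 1) / (g * t)) (/ g) else 0.
Proof.
  intros hx ht A.
  set (B1 := powp (1 - g * t) ((1 + g) / g) / (1 + g)).
  assert (B1ge : 0 <= B1)
    by (apply Rmult_le_pos; [apply powp_nonneg | left; apply Rinv_0_lt_compat; lra]).
  assert (xB : ~ x <= B1).
  { intros H; destruct (Rle_dec (1 - g * t) 0).
    - unfold B1 in H; rewrite powp_of_nonpos in H by assumption; lra.
    - apply A, (proj1 (Ypow_le_iff x (1 - g * t) hx ltac:(lra))), H. }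
  unfold rho_ex, rho_case2; rewrite rho_ex_threshold; fold B1.
  replace (powp ((1 + g) * x) (- g / (1 + g))) with (/ Ypow x)
    by (unfold Ypow; rewrite <- powp_opp_exp by nra; f_equal; field; lra).
  destruct (Rle_dec x 0); [lra |]; destruct (Rle_dec x B1); [lra |].
  destruct (Rle_dec (Rmax 0 B1) x) as [_ | c]; [reflexivity | exfalso; apply c, Rmax_lub; lra].
Qed.

Lemma rho_positive x t : 0 < x -> 0 <= t -> rho g x t = rho_ex g x t.
Proof.
  intros hx ht; rewrite rho_of_pos by exact hx.
  set (Y := Ypow x); assert (hY : 0 < Y) by apply Ypow_pos, hx.
  destruct (Rle_dec Y (1 - g * t)) as [A | A].
  - (* under the separating characteristic: [rho = (1 - g t)^(-1/g)] *)
    rewrite rho_ex_under by assumption.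
    assert (tl : t < / g) by (apply Rmult_lt_reg_l with g; [| rewrite Rinv_r]; lra).
    assert (0 <= Y / g) by (apply Rlt_le, Rdiv_lt_0_compat; lra).
    assert (Y / g <= / g - t) by (apply separatrix_le_iff; exact A).
    rewrite u_ex_left by lra.
    replace (g * (Y / g)) with Y by (field; lra).
    rewrite powp_div_base, !powp_opp_exp by lra; field.
    split; apply Rgt_not_eq, powp_pos; lra.
  - (* beyond it: the fan, which vanishes past [x = 1/(1+g)] *)
    rewrite rho_ex_over by assumption; fold Y.
    assert (Th1 : x <= / (1 + g) <-> Y <= 1)
      by (unfold Y; rewrite <- Ypow_le_iff, powp_one_base by lra; unfold Rdiv; rewrite Rmult_1_l; tauto).
    destruct (Rle_dec x (/ (1 + g))) as [X1 | X1].
    + assert (Y1 : Y <= 1) by (apply Th1, X1).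
      assert (htp : 0 < t) by (destruct (Req_dec t 0) as [-> |]; [rewrite Rmult_0_r in A |]; lra).
      assert (/ g - t < Y / g) by (apply Rnot_le_lt; rewrite separatrix_le_iff; lra).
      rewrite u_ex_right by (try exact hg; try (apply Rlt_le, Rdiv_lt_0_compat); lra).
      replace (g * (Y / g)) with Y by (field; lra).
      replace ((/ Y - 1) / (g * t)) with (((1 - Y) / (g * t)) * / Y) by (field; lra).
      rewrite powp_mul_base, powp_inv_base, powp_opp_exp by
        (try apply Rmult_le_pos; try (left; apply Rinv_0_lt_compat); nra).
      ring.
    + assert (~ Y <= 1) by (intro H; apply X1, Th1, H).
      assert (/ g < Y / g)
        by (rewrite <- (Rmult_1_l (/ g)) at 1; apply Rmult_lt_compat_r; [apply Rinv_0_lt_compat |]; lra).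
      rewrite u_ex_beyond by assumption; ring.
Qed.

End ChangeOfVariables.

(** ** The total mass [int_0^oo rho dx] *)

Section Primitive.

Variable g : R.
Hypothesis hg : 0 < g.
Variable t : R.
Hypothesis ht : 0 < t.

Let pg := inv_g_pos g hg.

(** The two branches of [u_ex g . t] and antiderivatives of them; [U_prim]
    is a primitive of [u_ex g . t] on [[0, oo)]. *)
Definition u_left z := powp (1 - g * t) (- / g) * powp (g * z) (/ g).
Definition u_right z := powp (g * t) (- / g) * powp (1 - g * z) (/ g).
Definition U_left z := powp (1 - g * t) (- / g) * powp (0 + g * z) (/ g + 1) / (1 + g).
Definition U_right z := (1 - powp (g * t) (- / g) * powp (1 + (- g) * z) (/ g + 1)) / (1 + g).
Definition U_prim z := if Rle_dec z (/ g - t) then U_left z else U_right z.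

Lemma U_left_derivative x : is_derive U_left x (u_left x).
Proof.
  apply is_derive_Reals; unfold U_left, u_left.
  assert (D := powp_affine_derivative 0 g (/ g + 1) x ltac:(lra)).
  apply (derivable_pt_lim_scal _ (powp (1 - g * t) (- / g))) in D.
  apply (derivable_pt_lim_scal _ (/ (1 + g))) in D; unfold mult_real_fct in D.
  replace (/ g + 1 - 1) with (/ g) in D by ring; rewrite Rplus_0_l in D.
  replace (powp (1 - g * t) (- / g) * powp (g * x) (/ g))
    with (/ (1 + g) * (powp (1 - g * t) (- / g) * ((/ g + 1) * powp (g * x) (/ g) * g))) by (field; lra).
  eapply derivable_pt_lim_ext; [| exact D]; intros y; unfold Rdiv; ring.
Qed.

Lemma U_right_derivative x : is_derive U_right x (u_right x).
Proof.
  apply is_derive_Reals; unfold U_right, u_right.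
  assert (D := powp_affine_derivative 1 (- g) (/ g + 1) x ltac:(lra)).
  apply (derivable_pt_lim_scal _ (powp (g * t) (- / g))) in D.
  assert (D2 := derivable_pt_lim_minus _ _ _ _ _ (derivable_pt_lim_const 1 x) D).
  apply (derivable_pt_lim_scal _ (/ (1 + g))) in D2; unfold mult_real_fct, minus_fct in D2.
  replace (/ g + 1 - 1) with (/ g) in D2 by ring.
  replace (1 + - g * x) with (1 - g * x) in D2 by ring.
  replace (powp (g * t) (- / g) * powp (1 - g * x) (/ g))
    with (/ (1 + g) * (0 - powp (g * t) (- / g) * ((/ g + 1) * powp (1 - g * x) (/ g) * - g)))
    by (field; lra).
  eapply derivable_pt_lim_ext; [| exact D2]; intros y; unfold fct_cte, Rdiv; ring.
Qed.

Lemma cont_R_u_left_profile : cont_R u_left.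
Proof.
  apply cont_R_mult; [apply cont_R_const |]; intros z.
  apply continuity_pt_ext with (f := fun z => powp (0 + g * z) (/ g));
    [intros; rewrite Rplus_0_l; reflexivity | apply cont_R_powp_affine, pg].
Qed.

Lemma cont_R_u_right_profile : cont_R u_right.
Proof.
  apply cont_R_mult; [apply cont_R_const |]; intros z.
  apply continuity_pt_ext with (f := fun z => powp (1 + (- g) * z) (/ g));
    [intros; f_equal; ring | apply cont_R_powp_affine, pg].
Qed.

(** [int_a^b u_ex(xi, t) dxi = U_prim b - U_prim a] for [0 < a <= b]: the
    primitives of the two branches agree on the separating characteristic. *)
Lemma u_ex_integral a b : 0 < a <= b -> is_RInt (fun z => u_ex g z t) a b (U_prim b - U_prim a).
Proof.
  intros [ha hab]; unfold U_prim.
  apply is_RInt_two_pieces with u_left u_right;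
    auto using U_left_derivative, U_right_derivative, cont_R_u_left_profile, cont_R_u_right_profile.
  - intros x Hx Hc; assert (gt := mul_g_lt_one g hg t ltac:(lra)).
    rewrite u_ex_left by lra; unfold u_left.
    rewrite powp_div_base, powp_opp_exp by nra; field; apply Rgt_not_eq, powp_pos; lra.
  - intros x Hx Hc; rewrite u_ex_right by (auto; lra); unfold u_right.
    destruct (Rle_dec (1 - g * x) 0).
    + assert (Q : (1 - g * x) / (g * t) <= 0)
        by (unfold Rdiv; apply Rmult_le_0_r; [| left; apply Rinv_0_lt_compat]; nra).
      rewrite (powp_of_nonpos _ _ Q), (powp_of_nonpos (1 - g * x)) by assumption; ring.
    + rewrite powp_div_base, powp_opp_exp by nra; field; apply Rgt_not_eq, powp_pos; nra.
  - intros hc; unfold U_left, U_right; assert (gt := mul_g_lt_one g hg t ltac:(lra)).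
    replace (0 + g * (/ g - t)) with (1 - g * t) by (field; lra).
    replace (1 + - g * (/ g - t)) with (g * t) by (field; lra).
    rewrite <- !powp_add_exp; replace (- / g + (/ g + 1)) with 1 by ring.
    rewrite !powp_one_exp by nra; reflexivity.
Qed.

Lemma U_prim_beyond z : / g <= z -> U_prim z = / (1 + g).
Proof.
  intros hz; unfold U_prim; destruct (Rle_dec z (/ g - t)); [lra |]; unfold U_right.
  assert (g * / g <= g * z) by (apply Rmult_le_compat_l; lra); rewrite (mul_inv_g g hg) in *.
  rewrite (powp_of_nonpos (1 + - g * z)) by lra; field; lra.
Qed.

(** The limit of the primitive at [xi = 0+]. *)
Definition U_prim_at_zero := if Rlt_dec t (/ g) then 0 else U_right 0.

End Primitive.

Section TotalMass.

Variable g : R.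
Hypothesis hg : 0 < g.

Let pg := inv_g_pos g hg.

Lemma cont_R_Ypow_over_g : cont_R (fun a => Ypow g a / g).
Proof.
  apply cont_R_mult; [| apply cont_R_const]; intros a; unfold Ypow.
  apply continuity_pt_ext with (f := fun a => powp (0 + (1 + g) * a) (g / (1 + g)));
    [intros; rewrite Rplus_0_l; reflexivity | apply cont_R_powp_affine, Rdiv_lt_0_compat; lra].
Qed.

Lemma Ypow_zero : Ypow g 0 = 0.
Proof. unfold Ypow; rewrite Rmult_0_r; apply powp_of_nonpos; lra. Qed.

Lemma dxi_continuous x : 0 < x -> continuity_pt (dxi g) x.
Proof.
  intros hx; apply continuity_pt_ext_loc with (fun y => powp ((1 + g) * y) (- / (1 + g))).
  - exists (mkposreal x hx); intros y Hy%ball_bounds; simpl in Hy.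
    unfold dxi; rewrite Rabs_pos_eq by lra; reflexivity.
  - apply (continuity_pt_comp (fun y => (1 + g) * y) (fun z => powp z (- / (1 + g)))).
    + apply continuity_pt_ext with (f := fun y => 0 + y * (1 + g)); [intros; ring | apply cont_R_affine].
    + apply derivable_continuous_pt; exists (- / (1 + g) * powp ((1 + g) * x) (- / (1 + g) - 1)).
      apply powp_derivative_pos; nra.
Qed.

Lemma xi_monotone a b : 0 < a <= b -> xi g a <= xi g b.
Proof.
  intros [ha hab]; rewrite !xi_of_pos by lra; unfold Rdiv; apply Rmult_le_compat_r; [lra |].
  apply powp_le_base; [apply Rlt_le, Rdiv_lt_0_compat |]; nra.
Qed.

Lemma xi_beyond b : / (1 + g) <= b -> / g <= xi g b.
Proof.
  intros hb; assert (0 < / (1 + g)) by (apply Rinv_0_lt_compat; lra).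
  rewrite xi_of_pos by lra; unfold Rdiv; rewrite <- (Rmult_1_l (/ g)) at 1.
  apply Rmult_le_compat_r; [lra |].
  rewrite <- (powp_one_base (g / (1 + g))); apply powp_le_base; [apply Rlt_le, Rdiv_lt_0_compat; lra |].
  apply Rmult_le_reg_l with (/ (1 + g)); [assumption |].
  rewrite <- Rmult_assoc, Rinv_l, Rmult_1_l, Rmult_1_r by lra; exact hb.
Qed.

(** Change of variables: [int_a^b rho dx = int_xi(a)^xi(b) u dxi]. *)
Lemma rho_integral t a b : 0 < t -> 0 < a <= b ->
  is_RInt (fun x => rho g x t) a b (U_prim g t (xi g b) - U_prim g t (xi g a)).
Proof.
  intros ht [ha hab].
  assert (Cu : forall x, a <= x <= b -> continuity_pt (fun z => u_ex g z t) (xi g x))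
    by (intros x Hx; apply u_ex_continuous; auto; apply Rgt_not_eq, xi_pos; lra).
  assert (E : ex_RInt (fun x => rho g x t) a b).
  { apply (ex_RInt_continuous (V := R_CompleteNormedModule)); intros z Hz.
    rewrite Rmin_left, Rmax_right in Hz by lra; apply continuity_pt_filterlim.
    unfold rho; apply continuity_pt_mult; [apply dxi_continuous; lra |].
    apply (continuity_pt_comp (xi g) (fun z => u_ex g z t)); [| apply Cu, Hz].
    apply derivable_continuous_pt; exists (dxi g z); apply xi_derivative; lra. }
  assert (Eq : RInt (fun x => rho g x t) a b = RInt (fun z => u_ex g z t) (xi g a) (xi g b)).
  { rewrite <- (RInt_comp (V := R_CompleteNormedModule) (fun z => u_ex g z t) (xi g) (dxi g)); [reflexivity | |];
      intros x Hx; rewrite Rmin_left, Rmax_right in Hx by lra.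
    - apply continuity_pt_filterlim, Cu, Hx.
    - split; [apply is_derive_Reals, xi_derivative; lra | apply continuity_pt_filterlim, dxi_continuous; lra]. }
  assert (V := u_ex_integral g hg t ht (xi g a) (xi g b) (conj (xi_pos g hg a ha) (xi_monotone a b (conj ha hab)))).
  apply (is_RInt_unique (V := R_CompleteNormedModule)) in V.
  rewrite <- V, <- Eq; apply (RInt_correct (V := R_CompleteNormedModule)), E.
Qed.

Lemma U_prim_near_zero t : 0 < t -> forall eps, 0 < eps -> exists d, 0 < d /\
  forall a, 0 < a < d -> Rabs (U_prim g t (xi g a) - U_prim_at_zero g t) < eps.
Proof.
  intros ht eps he; unfold U_prim_at_zero.
  assert (CU : forall (F f : R -> R), (forall x, is_derive F x (f x)) ->
             continuity_pt (fun a => F (Ypow g a / g)) 0).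
  { intros F f DF; apply (continuity_pt_comp (fun a => Ypow g a / g) F); [apply cont_R_Ypow_over_g |].
    apply derivable_continuous_pt; exists (f (Ypow g 0 / g)); apply is_derive_Reals, DF. }
  destruct (Rlt_dec t (/ g)) as [tl | tl].
  - (* near [0] the left branch is used, and [U_left 0 = 0] *)
    destruct (continuity_pt_right_limit _ _ (CU _ _ (U_left_derivative g hg t)) eps he) as [d1 [hd1 H1]].
    destruct (continuity_pt_right_limit _ _ (cont_R_Ypow_over_g 0) (/ g - t) ltac:(lra)) as [d2 [hd2 H2]].
    exists (Rmin d1 d2); split; [apply Rmin_pos; assumption |]; intros a Ha.
    assert (Rmin d1 d2 <= d1) by apply Rmin_l; assert (Rmin d1 d2 <= d2) by apply Rmin_r.
    specialize (H1 a ltac:(lra)); specialize (H2 a ltac:(lra)).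
    rewrite Ypow_zero, Rdiv_0_l, Rminus_0_r in H2; rewrite Ypow_zero, Rdiv_0_l in H1.
    replace (U_left g t 0) with 0 in H1
      by (unfold U_left; rewrite Rmult_0_r, Rplus_0_r, (powp_of_nonpos 0) by lra; field; lra).
    assert (Hxa : 0 < Ypow g a / g) by (apply Rdiv_lt_0_compat; [apply Ypow_pos |]; lra).
    rewrite Rabs_pos_eq in H2 by lra.
    unfold U_prim; rewrite xi_of_pos by lra; destruct (Rle_dec (Ypow g a / g) (/ g - t)); [exact H1 | lra].
  - (* for [t >= 1/g] only the right branch remains *)
    destruct (continuity_pt_right_limit _ _ (CU _ _ (U_right_derivative g hg t)) eps he) as [d1 [hd1 H1]].
    exists d1; split; [exact hd1 |]; intros a Ha; specialize (H1 a ltac:(lra)).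
    rewrite Ypow_zero, Rdiv_0_l in H1.
    assert (Hxa : 0 < Ypow g a / g) by (apply Rdiv_lt_0_compat; [apply Ypow_pos |]; lra).
    unfold U_prim; rewrite xi_of_pos by lra; destruct (Rle_dec (Ypow g a / g) (/ g - t)); [lra | exact H1].
Qed.

Lemma improper_mass_positive_time t : 0 < t ->
  improper_int0 (fun x => rho g x t) (/ (1 + g) - U_prim_at_zero g t).
Proof.
  intros ht eps he; destruct (U_prim_near_zero t ht eps he) as [d1 [hd1 H1]].
  set (d := Rmin d1 1); assert (hd : 0 < d) by (apply Rmin_pos; lra).
  assert (m1 : d <= d1) by apply Rmin_l; assert (m2 : d <= 1) by apply Rmin_r.
  exists d; split; [exact hd |]; intros a b Ha Hb.
  assert (id1 : 1 <= / d) by (rewrite <- Rinv_1; apply Rinv_le_contravar; lra).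
  assert (Hb1 : / (1 + g) <= b) by (assert (/ (1 + g) < 1) by (rewrite <- Rinv_1; apply Rinv_lt_contravar; lra); lra).
  exists (U_prim g t (xi g b) - U_prim g t (xi g a)); split.
  - apply is_RInt_Riemann, rho_integral; [exact ht | lra].
  - rewrite U_prim_beyond by (try apply xi_beyond; assumption).
    replace (/ (1 + g) - U_prim g t (xi g a) - (/ (1 + g) - U_prim_at_zero g t))
      with (- (U_prim g t (xi g a) - U_prim_at_zero g t)) by ring.
    rewrite Rabs_Ropp; apply H1; lra.
Qed.

Lemma rho_initial x : 0 < x -> rho g x 0 = if Rle_dec x (/ (1 + g)) then 1 else 0.
Proof.
  intros hx; rewrite rho_positive by (auto; lra); unfold rho_ex, rho_case2.
  rewrite Rmult_0_r, Rminus_0_r, (Rmax_right 0 1), !powp_one_base by lra; unfold Rdiv; rewrite Rmult_1_l.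
  destruct (Rle_dec x 0); [lra |].
  destruct (Rle_dec x (/ (1 + g))).
  - destruct (Rle_dec 0 0); [| lra]; destruct (Rlt_dec 0 (/ g)); [reflexivity | lra].
  - rewrite Rmax_right by (left; apply Rinv_0_lt_compat; lra).
    destruct (Rle_dec (/ (1 + g)) x); [reflexivity | lra].
Qed.

(** At [t = 0], [rho] is the indicator of [(0, 1/(1+g)]]. *)
Lemma improper_mass_initial : improper_int0 (fun x => rho g x 0) (/ (1 + g)).
Proof.
  intros eps he; assert (hc : 0 < / (1 + g)) by (apply Rinv_0_lt_compat; lra).
  assert (hc1 : / (1 + g) < 1) by (rewrite <- Rinv_1; apply Rinv_lt_contravar; lra).
  set (d := Rmin (Rmin eps 1) (/ (1 + g))).
  assert (hd : 0 < d) by (apply Rmin_pos; [apply Rmin_pos |]; lra).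
  assert (m1 := Rmin_l (Rmin eps 1) (/ (1 + g))); assert (m2 := Rmin_r (Rmin eps 1) (/ (1 + g))).
  assert (m3 := Rmin_l eps 1); assert (m4 := Rmin_r eps 1); fold d in m1, m2.
  exists d; split; [exact hd |]; intros a b Ha Hb.
  assert (id1 : 1 <= / d) by (rewrite <- Rinv_1; apply Rinv_le_contravar; lra).
  exists (/ (1 + g) - a); split.
  - apply is_RInt_Riemann.
    assert (H := is_RInt_two_pieces (fun x => rho g x 0) (fun x => x) (fun _ => / (1 + g))
                   (fun _ => 1) (fun _ => 0) (/ (1 + g)) a b ltac:(lra)
                   (fun x => is_derive_id x) (fun x => is_derive_const (/ (1 + g)) x)
                   (cont_R_const 1) (cont_R_const 0)).
    destruct (Rle_dec b (/ (1 + g))) in H; [lra |]; destruct (Rle_dec a (/ (1 + g))) in H; [| lra].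
    apply H; [| | reflexivity]; intros x Hx Hc; rewrite rho_initial by lra;
      destruct (Rle_dec x (/ (1 + g))); (reflexivity || lra).
  - replace (/ (1 + g) - a - / (1 + g)) with (- a) by ring; rewrite Rabs_Ropp, Rabs_pos_eq; lra.
Qed.

(** Until [t = 1/g], when the fan reaches [xi = 0], the mass [1/(1+g)] is conserved. *)
Lemma total_mass_conserved t : 0 <= t <= / g -> improper_int0 (fun x => rho g x t) (/ (1 + g)).
Proof.
  intros [h1 h2]; destruct (Req_dec t 0) as [-> | hn]; [apply improper_mass_initial |].
  replace (/ (1 + g)) with (/ (1 + g) - U_prim_at_zero g t); [apply improper_mass_positive_time; lra |].
  unfold U_prim_at_zero; destruct (Rlt_dec t (/ g)); [ring |].
  replace t with (/ g) by lra; unfold U_right.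
  rewrite Rinv_r, powp_one_base, Rmult_0_r, Rplus_0_r, powp_one_base by lra; field; lra.
Qed.

(** Afterwards mass leaves through [xi = 0]: [int rho = (g t)^(-1/g) / (1+g)]. *)
Lemma total_mass_decaying t : / g <= t ->
  improper_int0 (fun x => rho g x t) (/ (1 + g) * powp (g * t) (- / g)).
Proof.
  intros h; replace (/ (1 + g) * powp (g * t) (- / g)) with (/ (1 + g) - U_prim_at_zero g t);
    [apply improper_mass_positive_time; lra |].
  unfold U_prim_at_zero; destruct (Rlt_dec t (/ g)); [lra |]; unfold U_right.
  rewrite Rmult_0_r, Rplus_0_r, powp_one_base; field; lra.
Qed.

End TotalMass.

Theorem mainTheorem4 (g : R) (hg : 0 < g) :
  (forall z, u_I g (fI_ex g) z =
     (if Rle_dec 0 z then (if Rle_dec z (/ g) then powp (g * z) (/ g) else 0)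
      else 0)) /\
  entropy_solution g (u_I g (fI_ex g)) (u_ex g) /\
  (forall x, x <> 0 -> derivable_pt_lim (xi g) x (dxi g x)) /\
  (forall x t, 0 < x -> 0 <= t -> rho g x t = rho_ex g x t) /\
  (forall x t, x < 0 -> 0 <= t -> rho g x t = 0) /\
  (forall t, 0 <= t <= / g -> improper_int0 (fun x => rho g x t) (/ (1 + g))) /\
  (forall t, / g <= t ->
     improper_int0 (fun x => rho g x t) (/ (1 + g) * powp (g * t) (- / g))).
Proof.
  split; [exact (datum_formula g hg) |].
  split; [exact (u_ex_entropy_solution g hg) |].
  split; [exact (xi_derivative g hg) |].
  split; [exact (rho_positive g hg) |].
  split; [exact (rho_negative g hg) |].
  split; [exact (total_mass_conserved g hg) | exact (total_mass_decaying g hg)].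
Qed.
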